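(* Let $n\ge1$, $\rho=2n+1$, and let $\nu$ be an integer with $\nu>\rho-2$. Define on $\mathbb R$ \[ \mathbf b_\nu(\lambda)=\begin{cases}\mathbf c_\nu(\lambda)&\text{if }\frac{\nu-\rho+2}2\in\mathbb Z^+,\\ \lambda\,\mathbf c_\nu(\lambda)&\text{if }\frac{\nu-\rho+2}2\notin\mathbb Z^+,\end{cases} \] where $\mathbf c_\nu(\lambda)=2^{\rho-i\lambda}\frac{\Gamma(\rho-1)\Gamma(i\lambda)}{\Gamma(\frac{i\lambda+\nu+\rho}2)\Gamma(\frac{i\lambda+\rho-\nu-2}2)}$ (extended by continuity at $\lambda=0$). Then (i) $\mathbf b_\nu$ has no zero in $\mathbb R$; (ii) there exists $C>0$ such that for all $\lambda\in\mathbb R$, \[ C^{-1}(1+\lambda^2)^{\frac{2\rho-4-\varepsilon(\nu)}4}\le|\mathbf b_\nu(\lambda)|^{-1}\le C(1+\lambda^2)^{\frac{2\rho-4-\varepsilon(\nu)}4}, \] where $\varepsilon(\nu)=1$ if $\frac{\nu-\rho+2}2\notin\mathbb Z^+$ and $\varepsilon(\nu)=-1$ if $\frac{\nu-\rho+2}2\in\mathbb Z^+$.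
   Context: $\mathbb Z^+$ denotes the set of nonnegative integers (under the hypothesis $\nu>\rho-2$ this is equivalent to positive integers here). *)

From Stdlib Require Import Reals ZArith ClassicalEpsilon.
From Coquelicot Require Import Coquelicot.
Open Scope R_scope.

Notation CC := Complex.C.
Definition C_CS : CompleteSpace :=
  CompleteNormedModule.CompleteSpace _ C_CompleteNormedModule.

Definition cexp (z : CC) : CC :=
  Cmult (RtoC (exp (Re z))) (cos (Im z), sin (Im z)).

Definition cpow (a : R) (z : CC) : CC := cexp (Cmult z (RtoC (ln a))).

(* Gauss' product for the Gamma function:
   G_N(z) = N! N^z / (z (z+1) ... (z+N)) *)
Fixpoint poch_prod (z : CC) (N : nat) : CC :=
  match N with
  | O => z
  | S m => Cmult (poch_prod z m) (Cplus z (RtoC (INR (S m))))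
  end.

Definition gauss_seq (z : CC) (N : nat) : CC :=
  Cdiv (Cmult (RtoC (INR (fact N))) (cpow (INR N) z)) (poch_prod z N).

(* Complex Gamma function (Gauss' limit formula, valid off the poles
   0, -1, -2, ...): Gamma z = lim_{N -> oo} G_N(z). *)
Definition Gamma (z : CC) : CC := @lim C_CS (filtermap (gauss_seq z) eventually).

Definition rho (n : nat) : R := 2 * INR n + 1.

Definition inZplus (x : R) : Prop := exists k : nat, x = INR k.

Definition cond (n : nat) (nu : Z) : Prop := inZplus ((IZR nu - rho n + 2) / 2).

Definition c_nu (n : nat) (nu : Z) (l : R) : CC :=
  let il : CC := Cmult Ci (RtoC l) in
  Cdiv
    (Cmult (Cmult (cpow 2 (Cminus (RtoC (rho n)) il)) (Gamma (RtoC (rho n - 1))))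
           (Gamma il))
    (Cmult (Gamma (Cdiv (Cplus il (RtoC (IZR nu + rho n))) (RtoC 2)))
           (Gamma (Cdiv (Cplus il (RtoC (rho n - IZR nu - 2))) (RtoC 2)))).

(* b_nu by the formula (meaningful for lambda <> 0) *)
Definition b_raw (n : nat) (nu : Z) (l : R) : CC :=
  if excluded_middle_informative (cond n nu) then c_nu n nu l
  else Cmult (RtoC l) (c_nu n nu l).

Definition b_nu (n : nat) (nu : Z) (l : R) : CC :=
  if Req_EM_T l 0 then @lim C_CS (filtermap (b_raw n nu) (locally' 0))
  else b_raw n nu l.

Definition eps_nu (n : nat) (nu : Z) : R :=
  if excluded_middle_informative (cond n nu) then -1 else 1.

From Stdlib Require Import Reals ZArith Lra Lia ClassicalEpsilon.
From Coquelicot Require Import Coquelicot.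
Open Scope R_scope.

(* Write [nu = 2n + 2k + 1] when [(nu - rho + 2)/2] is in Z^+ and [nu = 2n + 2k] otherwise.
   Shifting the arguments [(i l + nu + rho)/2] and [(i l + rho - nu - 2)/2] to real part [x = 1],
   resp. [x = 1/2], with [Gamma (z+1) = z Gamma z] cancels every pole and turns [b_nu] into a
   closed form, continuous at [l = 0], whose modulus is [|Gamma (1 + i l)| / |Gamma (x + i l/2)|^2]
   times Pochhammer ratios of size [(1 + l^2)^(-(2n-1)/2)].  Legendre's duplication formula, in
   the discrete form of Gauss's products, together with the log-convexity in [x] of
   [prod_j (1 + y^2/(x+j)^2)], shows that [|Gamma (1 + i l)| / |Gamma (x + i l/2)|^2] is
   comparable to [(1 + l^2)^(-/+ 1/4)]; this is (ii), and (i) follows from the lower bound.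
   Since [Gamma] is defined as the limit of Gauss's products, its recursion, its non-vanishing for
   [Re z > 0] and its continuity are first derived from a quantitative estimate of their
   convergence. *)

(** * The complex exponential and elementary bounds *)

Lemma C_ext (a b : C) : fst a = fst b -> snd a = snd b -> a = b.
Proof. destruct a, b; simpl; intros; subst; reflexivity. Qed.

Lemma cexp_add (a b : C) : cexp (a + b)%C = (cexp a * cexp b)%C.
Proof.
  unfold cexp; destruct a as [a1 a2], b as [b1 b2]; simpl.
  rewrite exp_plus, cos_plus, sin_plus.
  apply C_ext; simpl; ring.
Qed.

Lemma Cmod_cexp (z : C) : Cmod (cexp z) = exp (Re z).
Proof.
  unfold cexp. rewrite Cmod_mult, Cmod_R, Rabs_pos_eq by (left; apply exp_pos).
  unfold Cmod; simpl.
  replace (cos (Im z) * (cos (Im z) * 1) + sin (Im z) * (sin (Im z) * 1)) with 1.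
  - rewrite sqrt_1; ring.
  - pose proof (sin2_cos2 (Im z)) as H; unfold Rsqr in H; lra.
Qed.

Lemma cexp_neq0 (z : C) : cexp z <> 0%C.
Proof.
  intro H. assert (Hm : Cmod (cexp z) = 0) by (rewrite H; apply Cmod_0).
  rewrite Cmod_cexp in Hm. pose proof (exp_pos (Re z)); lra.
Qed.

Lemma cexp_RtoC (x : R) : cexp (RtoC x) = RtoC (exp x).
Proof. unfold cexp; simpl. rewrite cos_0, sin_0. apply C_ext; simpl; ring. Qed.

Lemma cpow_add (a : R) (w1 w2 : C) : cpow a (w1 + w2)%C = (cpow a w1 * cpow a w2)%C.
Proof.
  unfold cpow. rewrite <- cexp_add. f_equal. destruct w1, w2; apply C_ext; simpl; ring.
Qed.

Lemma Cmod_cpow (a : R) (w : C) : Cmod (cpow a w) = exp (Re w * ln a).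
Proof. unfold cpow; rewrite Cmod_cexp; f_equal; destruct w; simpl; ring. Qed.

Lemma cpow_1 (a : R) : 0 < a -> cpow a (RtoC 1) = RtoC a.
Proof.
  intro Ha. unfold cpow.
  replace (RtoC 1 * RtoC (ln a))%C with (RtoC (ln a)) by (apply C_ext; simpl; ring).
  rewrite cexp_RtoC, exp_ln; auto.
Qed.

Lemma Cmod_le_Rabs_parts (z : C) : Cmod z <= Rabs (fst z) + Rabs (snd z).
Proof.
  destruct z as [x y]. unfold Cmod; simpl.
  apply Rsqr_incr_0_var; [|pose proof (Rabs_pos x); pose proof (Rabs_pos y); lra].
  rewrite Rsqr_sqrt by nra. unfold Rsqr.
  pose proof (Rabs_pos x); pose proof (Rabs_pos y).
  rewrite <- (Rabs_pos_eq (x * (x * 1))), <- (Rabs_pos_eq (y * (y * 1))) by nra.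
  rewrite !Rabs_mult, Rabs_R1. nra.
Qed.

Lemma Rabs_re_le_Cmod (c : C) : Rabs (fst c) <= Cmod c.
Proof. eapply Rle_trans; [apply Rmax_l|apply Rmax_Cmod]. Qed.

Lemma Rabs_im_le_Cmod (c : C) : Rabs (snd c) <= Cmod c.
Proof. eapply Rle_trans; [apply Rmax_r|apply Rmax_Cmod]. Qed.

Lemma Cmod_pair_sqr (a b : R) : Cmod (a, b) ^ 2 = a ^ 2 + b ^ 2.
Proof. unfold Cmod; cbn [fst snd]. rewrite pow2_sqrt; [ring| nra]. Qed.

Lemma pow2_gt_0 (x : R) : x <> 0 -> 0 < x ^ 2.
Proof. intro H. rewrite <- Rsqr_pow2. apply Rsqr_pos_lt, H. Qed.

Lemma exp_le_inv_1_minus (a : R) : a < 1 -> exp a <= / (1 - a).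
Proof.
  intro H. pose proof (exp_ineq1_le (- a)) as Hle. rewrite exp_Ropp in Hle.
  rewrite <- (Rinv_inv (exp a)). apply Rinv_le_contravar; lra.
Qed.

Lemma exp_le_2 (a : R) : a <= 1/2 -> exp a <= 2.
Proof.
  intro H. pose proof (exp_le_inv_1_minus a ltac:(lra)).
  assert (/ (1 - a) <= 2).
  { apply (Rmult_le_reg_r (1 - a)); [lra|]. rewrite Rinv_l by lra. lra. }
  lra.
Qed.

Lemma Rabs_exp_sub_1_sub_le (a : R) :
  Rabs a <= 1/2 -> Rabs (exp a - 1 - a) <= 2 * a ^ 2.
Proof.
  intro H. apply Rabs_le_between in H. pose proof (exp_ineq1_le a).
  pose proof (exp_le_inv_1_minus a ltac:(lra)).
  assert (/ (1 - a) - 1 - a <= 2 * a ^ 2).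
  { replace (/ (1 - a) - 1 - a) with (a ^ 2 / (1 - a)) by (field; lra).
    apply (Rmult_le_reg_r (1 - a)); [lra|].
    unfold Rdiv. rewrite Rmult_assoc, Rinv_l by lra. nra. }
  rewrite Rabs_pos_eq by lra. lra.
Qed.

Lemma Rabs_exp_sub_1_le (a : R) : Rabs a <= 1/2 -> Rabs (exp a - 1) <= 2 * Rabs a.
Proof.
  intro H. pose proof (Rabs_exp_sub_1_sub_le a H).
  replace (exp a - 1) with ((exp a - 1 - a) + a) by ring.
  eapply Rle_trans; [apply Rabs_triang|].
  assert (a ^ 2 = Rabs a * Rabs a) by (rewrite <- Rabs_mult, Rabs_pos_eq; nra).
  pose proof (Rabs_pos a). nra.
Qed.

Lemma Rabs_sin_le (b : R) : Rabs (sin b) <= Rabs b.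
Proof.
  assert (Hpos : forall x, 0 <= x -> Rabs (sin x) <= x).
  { intros x Hx. destruct (Rle_lt_dec 1 x) as [H1|H1].
    - pose proof (SIN_bound x) as Hs. apply Rabs_le in Hs. lra.
    - destruct (Req_dec x 0) as [->|H0]; [rewrite sin_0, Rabs_R0; lra|].
      pose proof (sin_lt_x x ltac:(lra)).
      pose proof (sin_gt_0 x ltac:(lra) ltac:(pose proof PI2_1; lra)).
      rewrite Rabs_pos_eq; lra. }
  destruct (Rle_dec 0 b) as [Hb|Hb].
  - rewrite (Rabs_pos_eq b) by lra. auto.
  - rewrite (Rabs_left b) by lra. rewrite <- Rabs_Ropp, <- sin_neg. apply Hpos. lra.
Qed.

Lemma one_sub_cos_bounds (b : R) : 0 <= 1 - cos b <= b ^ 2 / 2.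
Proof.
  replace (cos b) with (1 - 2 * sin (b/2) * sin (b/2))
    by (rewrite <- cos_2a_sin; f_equal; field).
  pose proof (Rabs_sin_le (b/2)). pose proof (Rabs_pos (sin (b/2))).
  assert (sin (b/2) * sin (b/2) = Rabs (sin (b/2)) * Rabs (sin (b/2)))
    by (rewrite <- Rabs_mult, Rabs_pos_eq; nra).
  assert (b ^ 2 / 2 = 2 * (Rabs (b/2) * Rabs (b/2))) by (rewrite <- Rabs_mult, Rabs_pos_eq; [field|nra]).
  assert (Rabs (sin (b/2)) * Rabs (sin (b/2)) <= Rabs (b/2) * Rabs (b/2))
    by (apply Rmult_le_compat; lra).
  split; nra.
Qed.

Lemma sin_ge_cubic (b : R) : 0 <= b <= 1 -> b - b ^ 3 / 6 <= sin b.
Proof.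
  intros Hb. destruct (SIN b) as [H1 _]; [lra|pose proof PI2_1; lra|].
  unfold sin_lb, sin_approx, sin_term in H1. simpl sum_f_R0 in H1.
  replace (INR (fact (2 * 0 + 1))) with 1 in H1 by (simpl; ring).
  replace (INR (fact (2 * 1 + 1))) with 6 in H1 by (simpl; ring).
  replace (INR (fact (2 * 2 + 1))) with 120 in H1 by (simpl; ring).
  replace (INR (fact (2 * 3 + 1))) with 5040 in H1 by (simpl; ring).
  assert (Hbb : 0 <= b * b <= 1) by nra.
  assert (0 <= b ^ 3) by (apply pow_le; lra).
  assert (b ^ 5 <= b ^ 3) by (replace (b ^ 5) with (b ^ 3 * (b * b)) by ring; nra).
  assert (b ^ 7 <= b ^ 5) by (replace (b ^ 7) with (b ^ 5 * (b * b)) by ring;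
    assert (0 <= b ^ 5) by (apply pow_le; lra); nra).
  assert (0 <= b ^ 7) by (apply pow_le; lra).
  simpl in *. lra.
Qed.

Lemma Rabs_sin_sub_le (b : R) : Rabs b <= 1 -> Rabs (sin b - b) <= Rabs b ^ 3 / 6.
Proof.
  assert (Hpos : forall x, 0 <= x <= 1 -> Rabs (sin x - x) <= x ^ 3 / 6).
  { intros x Hx. pose proof (sin_ge_cubic x Hx).
    assert (sin x <= x)
      by (destruct (Req_dec x 0) as [->|]; [rewrite sin_0; lra| left; apply sin_lt_x; lra]).
    rewrite Rabs_left1; lra. }
  intro H. destruct (Rle_dec 0 b) as [Hb|Hb].
  - rewrite (Rabs_pos_eq b) in * by lra. auto.
  - rewrite (Rabs_left b) in * by lra.
    rewrite <- Rabs_Ropp. replace (- (sin b - b)) with (sin (- b) - - b) by (rewrite sin_neg; ring).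
    apply Hpos. lra.
Qed.

Lemma Cmod_cexp_sub_1_sub_le (u : C) :
  Cmod u <= 1/2 -> Cmod (cexp u - 1 - u) <= 3 * Cmod u ^ 2.
Proof.
  intro H. destruct u as [a b]. rewrite Cmod_pair_sqr.
  assert (Ha : Rabs a <= 1/2) by (eapply Rle_trans; [apply (Rabs_re_le_Cmod (a, b))|exact H]).
  assert (Hb : Rabs b <= 1/2) by (eapply Rle_trans; [apply (Rabs_im_le_Cmod (a, b))|exact H]).
  eapply Rle_trans; [apply Cmod_le_Rabs_parts|].
  unfold cexp; simpl.
  replace (exp a * cos b - 0 * sin b + - (1) + - a)
    with ((exp a - 1 - a) - exp a * (1 - cos b)) by ring.
  replace (exp a * sin b + 0 * cos b + - 0 + - b)
    with ((exp a - 1) * sin b + (sin b - b)) by ring.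
  pose proof (Rabs_exp_sub_1_sub_le a Ha). pose proof (Rabs_exp_sub_1_le a Ha).
  pose proof (exp_le_2 a ltac:(apply Rabs_le_between in Ha; lra)).
  pose proof (one_sub_cos_bounds b). pose proof (Rabs_sin_le b).
  pose proof (Rabs_sin_sub_le b ltac:(lra)). pose proof (exp_pos a).
  pose proof (Rabs_pos a); pose proof (Rabs_pos b).
  assert (Ea : a ^ 2 = Rabs a * Rabs a) by (rewrite <- Rabs_mult, Rabs_pos_eq; nra).
  assert (Eb : b ^ 2 = Rabs b * Rabs b) by (rewrite <- Rabs_mult, Rabs_pos_eq; nra).
  assert (E1 : Rabs ((exp a - 1 - a) - exp a * (1 - cos b)) <= 2 * a ^ 2 + b ^ 2).
  { unfold Rminus at 1. eapply Rle_trans; [apply Rabs_triang|].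
    rewrite Rabs_Ropp, Rabs_mult, (Rabs_pos_eq (exp a)), (Rabs_pos_eq (1 - cos b)) by lra.
    nra. }
  assert (E2 : Rabs ((exp a - 1) * sin b + (sin b - b)) <= a ^ 2 + 2 * b ^ 2).
  { eapply Rle_trans; [apply Rabs_triang|]. rewrite Rabs_mult.
    pose proof (Rabs_pos (sin b)). pose proof (Rabs_pos (exp a - 1)).
    assert (Rabs (exp a - 1) * Rabs (sin b) <= 2 * Rabs a * Rabs b)
      by (apply Rmult_le_compat; nra).
    assert (Rabs b ^ 3 <= b ^ 2) by (rewrite Eb; simpl; nra).
    assert (2 * Rabs a * Rabs b <= a ^ 2 + b ^ 2)
      by (pose proof (pow2_ge_0 (Rabs a - Rabs b)); nra).
    lra. }
  simpl in E1, E2 |- *. lra.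
Qed.

(** * Convergence of Gauss's product *)

(* Coquelicot's inverse is total with [/ 0 = 0], so this holds without side conditions. *)
Lemma Cinv_mult_total (p q : C) : (/ (p * q) = / p * / q)%C.
Proof.
  assert (Cinv0 : (/ RtoC 0)%C = RtoC 0) by (apply C_ext; simpl; unfold Rdiv; ring).
  destruct (Ceq_dec p 0) as [->|Hp].
  - replace (0 * q)%C with (RtoC 0) by ring. rewrite Cinv0. ring.
  - destruct (Ceq_dec q 0) as [->|Hq].
    + replace (p * 0)%C with (RtoC 0) by ring. rewrite Cinv0. ring.
    + field. auto.
Qed.

Lemma poch_prod_succ (z : C) (N : nat) :
  poch_prod z (S N) = (poch_prod z N * (z + RtoC (INR (S N))))%C.
Proof. reflexivity. Qed.

Lemma exists_nat_ge (x : R) : exists n : nat, x <= INR n.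
Proof. destruct (INR_unbounded x) as [n Hn]. exists n. lra. Qed.

Lemma exists_nat_ge_above (x : R) (k : nat) : exists N : nat, (k <= N)%nat /\ x < INR N.
Proof.
  destruct (exists_nat_ge (Rabs x + 1)) as [N HN]. exists (max k N). split; [lia|].
  pose proof (Rle_abs x). pose proof (le_INR N (max k N) ltac:(lia)). lra.
Qed.

Definition gauss_factor (K : R) (z : C) : C :=
  (cexp (z * RtoC (ln K - ln (K - 1))) * RtoC K / (z + RtoC K))%C.

Lemma gauss_seq_succ (z : C) (N : nat) : (1 <= N)%nat ->
  gauss_seq z (S N) = (gauss_seq z N * gauss_factor (INR (S N)) z)%C.
Proof.
  intro HN. unfold gauss_seq, gauss_factor, Cdiv.
  replace (INR (S N) - 1) with (INR N) by (rewrite S_INR; ring).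
  assert (HNp : 0 < INR N) by (apply lt_0_INR; lia).
  assert (Hc : cpow (INR (S N)) z
               = (cpow (INR N) z * cexp (z * RtoC (ln (INR (S N)) - ln (INR N))))%C).
  { unfold cpow. rewrite <- cexp_add. f_equal. destruct z; apply C_ext; simpl; ring. }
  rewrite Hc, poch_prod_succ, Cinv_mult_total, fact_simpl, mult_INR, RtoC_mult.
  ring.
Qed.

Lemma ln_sub_ln_pred_bounds (K : R) : 2 <= K -> / K <= ln K - ln (K - 1) <= / (K - 1).
Proof.
  intro HK.
  assert (Hle : forall x, 0 < x -> ln x <= x - 1).
  { intros x Hx. pose proof (exp_ineq1_le (ln x)) as H. rewrite exp_ln in H; lra. }
  split.
  - pose proof (Hle ((K - 1) / K) ltac:(apply Rdiv_lt_0_compat; lra)) as H.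
    rewrite ln_div in H by lra.
    replace ((K - 1) / K - 1) with (- / K) in H by (field; lra). lra.
  - pose proof (Hle (K / (K - 1)) ltac:(apply Rdiv_lt_0_compat; lra)) as H.
    rewrite ln_div in H by lra.
    replace (K / (K - 1) - 1) with (/ (K - 1)) in H by (field; lra). lra.
Qed.

Lemma Cmod_add_RtoC_ge (z : C) (K : R) : 0 <= K -> K - Cmod z <= Cmod (z + RtoC K).
Proof.
  intro HK. pose proof (Cmod_triangle (z + RtoC K) (- z)) as H.
  replace (z + RtoC K + - z)%C with (RtoC K) in H by ring.
  rewrite Cmod_opp, Cmod_R, Rabs_pos_eq in H; lra.
Qed.

Definition gauss_const (R0 : R) := 12 * R0 ^ 2 + 2 * R0.

Lemma gauss_const_ge0 (R0 : R) : 0 <= R0 -> 0 <= gauss_const R0.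
Proof. intro. unfold gauss_const. pose proof (pow2_ge_0 R0). nra. Qed.

Lemma gauss_factor_sub_1 (K : R) (z : C) : 0 < K -> (z + RtoC K)%C <> 0%C ->
  let L := ln K - ln (K - 1) in
  (gauss_factor K z - 1
   = (cexp (z * RtoC L) - 1 - z * RtoC L + z * RtoC (L - / K)) * (RtoC K / (z + RtoC K)))%C.
Proof.
  intros HK Hzk L. unfold gauss_factor. fold L.
  assert (HK0 : RtoC K <> RtoC 0) by (intro H; apply RtoC_inj in H; lra).
  rewrite RtoC_minus, RtoC_inv by lra. field. split; auto.
Qed.

Lemma sqr_div_pred_le (R0 K : R) : 2 <= K ->
  (R0 / (K - 1)) ^ 2 <= 2 * R0 ^ 2 * (/ (K - 1) - / K).
Proof.
  intro HK.
  replace (2 * R0 ^ 2 * (/ (K - 1) - / K))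
    with ((R0 / (K - 1)) ^ 2 + R0 ^ 2 * (K - 2) / (K * (K - 1) ^ 2)) by (field; lra).
  assert (0 <= R0 ^ 2 * (K - 2) / (K * (K - 1) ^ 2)).
  { apply Rle_mult_inv_pos; [pose proof (pow2_ge_0 R0); nra|].
    apply Rmult_lt_0_compat; [lra|apply pow_lt; lra]. }
  lra.
Qed.

(* Both terms of [gauss_factor_sub_1] are [O(1/K^2)], i.e. [O(1/(K-1) - 1/K)]. *)
Lemma Cmod_gauss_factor_sub_1_le (R0 K : R) (z : C) :
  0 <= R0 -> Cmod z <= R0 -> 2 * R0 + 2 <= K ->
  Cmod (gauss_factor K z - 1) <= gauss_const R0 * (/ (K - 1) - / K).
Proof.
  intros HR Hz HK.
  pose proof (Cmod_add_RtoC_ge z K ltac:(lra)) as Hzk.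
  rewrite gauss_factor_sub_1 by (try apply Cmod_gt_0; lra).
  set (L := ln K - ln (K - 1)). set (u := (z * RtoC L)%C).
  pose proof (ln_sub_ln_pred_bounds K ltac:(lra)) as HL. fold L in HL.
  assert (HL0 : 0 < L) by (pose proof (Rinv_0_lt_compat K ltac:(lra)); lra).
  rewrite Cmod_mult, Cmod_div, Cmod_R, Rabs_pos_eq by (try apply Cmod_gt_0; lra).
  assert (HKd : K / Cmod (z + RtoC K) <= 2).
  { apply (Rmult_le_reg_r (Cmod (z + RtoC K))); [lra|].
    unfold Rdiv. rewrite Rmult_assoc, Rinv_l by lra. lra. }
  assert (Hd0 : 0 <= / (K - 1) - / K).
  { replace (/ (K - 1) - / K) with (/ (K * (K - 1))) by (field; lra).
    apply Rlt_le, Rinv_0_lt_compat. nra. }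
  assert (Hu : Cmod u <= R0 / (K - 1)).
  { unfold u. rewrite Cmod_mult, Cmod_R, Rabs_pos_eq by lra.
    unfold Rdiv. apply Rmult_le_compat; try lra; apply Cmod_ge_0. }
  assert (Hu2 : R0 / (K - 1) <= 1/2).
  { apply (Rmult_le_reg_r (K - 1)); [lra|].
    unfold Rdiv. rewrite Rmult_assoc, Rinv_l by lra. lra. }
  pose proof (sqr_div_pred_le R0 K ltac:(lra)).
  pose proof (Cmod_cexp_sub_1_sub_le u ltac:(lra)).
  assert (Cmod u ^ 2 <= (R0 / (K - 1)) ^ 2) by (pose proof (Cmod_ge_0 u); nra).
  assert (Cmod (z * RtoC (L - / K)) <= R0 * (/ (K - 1) - / K)).
  { rewrite Cmod_mult, Cmod_R, Rabs_pos_eq by lra.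
    apply Rmult_le_compat; try lra; apply Cmod_ge_0. }
  assert (Htri : Cmod (cexp u - 1 - u + z * RtoC (L - / K))
                 <= 3 * Cmod u ^ 2 + R0 * (/ (K - 1) - / K))
    by (eapply Rle_trans; [apply Cmod_triangle|]; lra).
  pose proof (Cmod_ge_0 (cexp u - 1 - u + z * RtoC (L - / K))).
  assert (0 <= K / Cmod (z + RtoC K)) by (apply Rle_mult_inv_pos; lra).
  apply Rle_trans with ((3 * Cmod u ^ 2 + R0 * (/ (K - 1) - / K)) * 2).
  - apply Rmult_le_compat; lra.
  - unfold gauss_const. nra.
Qed.

Lemma exp_neg_twice_le (e : R) : 0 <= e <= 1/2 -> exp (- (2 * e)) <= 1 - e.
Proof.
  intro H. pose proof (exp_ineq1_le (2 * e)). rewrite exp_Ropp.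
  pose proof (exp_pos (2 * e)).
  apply (Rmult_le_reg_r (exp (2 * e))); [lra|]. rewrite Rinv_l by lra. nra.
Qed.

Section ProductIncrements.

Variables (g q : nat -> C) (f : nat -> R) (N : nat).
Hypothesis Hstep : forall M, (N <= M)%nat ->
  g (S M) = (g M * q M)%C /\ Cmod (q M - 1) <= f (S M) - f M /\ 0 <= f (S M) - f M <= 1/2.

Lemma product_increment_ge0 (d : nat) : 0 <= f (N + d)%nat - f N.
Proof.
  induction d as [|d IH]; [rewrite Nat.add_0_r; lra|].
  destruct (Hstep (N + d)%nat ltac:(lia)) as [_ [_ He]]. rewrite <- plus_n_Sm. lra.
Qed.

Lemma product_dist_le (d : nat) :
  Cmod (g (N + d)%nat - g N) <= Cmod (g N) * (exp (f (N + d)%nat - f N) - 1).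
Proof.
  induction d as [|d IH].
  - rewrite Nat.add_0_r, Rminus_diag, exp_0.
    replace (g N - g N)%C with (RtoC 0) by ring. rewrite Cmod_0. lra.
  - destruct (Hstep (N + d)%nat ltac:(lia)) as [Hg [Hq He]].
    pose proof (product_increment_ge0 d).
    rewrite <- plus_n_Sm, Hg.
    set (e := f (S (N + d)) - f (N + d)%nat) in *. set (D := f (N + d)%nat - f N) in *.
    replace (f (S (N + d)) - f N) with (D + e) by (unfold D, e; ring).
    pose proof (Cmod_ge_0 (g N)). pose proof (Cmod_ge_0 (g (N + d)%nat - g N)).
    pose proof (exp_ineq1_le D). pose proof (exp_ineq1_le e). pose proof (exp_pos D).
    replace (g (N + d)%nat * q (N + d)%nat - g N)%C
      with ((g (N + d)%nat - g N) * q (N + d)%nat + g N * (q (N + d)%nat - 1))%C by ring.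
    eapply Rle_trans; [apply Cmod_triangle|]. rewrite !Cmod_mult.
    assert (Hq1 : Cmod (q (N + d)%nat) <= 1 + e).
    { replace (q (N + d)%nat) with ((q (N + d)%nat - 1) + 1)%C by ring.
      eapply Rle_trans; [apply Cmod_triangle|]. rewrite Cmod_1. lra. }
    rewrite exp_plus.
    apply Rle_trans with (Cmod (g N) * (exp D - 1) * (1 + e) + Cmod (g N) * e).
    + apply Rplus_le_compat; [apply Rmult_le_compat; try lra; apply Cmod_ge_0|].
      apply Rmult_le_compat_l; lra.
    + assert (exp D * (1 + e) <= exp D * exp e) by (apply Rmult_le_compat_l; lra).
      nra.
Qed.

Lemma product_Cmod_ge (d : nat) :
  Cmod (g N) * exp (- (2 * (f (N + d)%nat - f N))) <= Cmod (g (N + d)%nat).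
Proof.
  induction d as [|d IH].
  - rewrite Nat.add_0_r, Rminus_diag. replace (- (2 * 0)) with 0 by ring. rewrite exp_0. lra.
  - destruct (Hstep (N + d)%nat ltac:(lia)) as [Hg [Hq He]].
    rewrite <- plus_n_Sm, Hg, Cmod_mult.
    set (e := f (S (N + d)) - f (N + d)%nat) in *. set (D := f (N + d)%nat - f N) in *.
    replace (f (S (N + d)) - f N) with (D + e) by (unfold D, e; ring).
    assert (Hq1 : 1 - e <= Cmod (q (N + d)%nat)).
    { pose proof (Cmod_triangle (q (N + d)%nat) (- (q (N + d)%nat - 1))) as Ht.
      replace (q (N + d)%nat + - (q (N + d)%nat - 1))%C with (RtoC 1) in Ht by ring.
      rewrite Cmod_1, Cmod_opp in Ht. lra. }
    pose proof (exp_neg_twice_le e He). pose proof (Cmod_ge_0 (g N)).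
    replace (- (2 * (D + e))) with (- (2 * D) + - (2 * e)) by ring. rewrite exp_plus.
    pose proof (exp_pos (- (2 * D))). pose proof (exp_pos (- (2 * e))).
    apply Rle_trans with (Cmod (g N) * exp (- (2 * D)) * (1 - e)).
    + rewrite Rmult_assoc. apply Rmult_le_compat_l; [lra|]. apply Rmult_le_compat_l; lra.
    + apply Rmult_le_compat; try lra. apply Rmult_le_pos; lra.
Qed.

End ProductIncrements.

Definition gauss_potential (R0 : R) (m : nat) : R := - (gauss_const R0 / INR m).

Lemma gauss_seq_step (R0 : R) (z : C) (m : nat) :
  0 <= R0 -> Cmod z <= R0 -> 2 * R0 + 2 + 2 * gauss_const R0 + 1 <= INR m ->
  gauss_seq z (S m) = (gauss_seq z m * gauss_factor (INR (S m)) z)%C /\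
  Cmod (gauss_factor (INR (S m)) z - 1) <= gauss_potential R0 (S m) - gauss_potential R0 m /\
  0 <= gauss_potential R0 (S m) - gauss_potential R0 m <= 1/2.
Proof.
  intros HR Hz Hm. pose proof (gauss_const_ge0 R0 HR) as HC.
  assert (Hf : gauss_potential R0 (S m) - gauss_potential R0 m
               = gauss_const R0 * / (INR m * (INR m + 1)))
    by (unfold gauss_potential; rewrite S_INR; field; lra).
  split; [apply gauss_seq_succ, INR_le; simpl; lra|]. split.
  - replace (gauss_potential R0 (S m) - gauss_potential R0 m)
      with (gauss_const R0 * (/ (INR (S m) - 1) - / INR (S m)))
      by (rewrite Hf, S_INR; field; lra).
    apply Cmod_gauss_factor_sub_1_le; auto. rewrite S_INR; lra.
  - rewrite Hf. split.
    + apply Rmult_le_pos; [lra|]. apply Rlt_le, Rinv_0_lt_compat; nra.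
    + apply (Rmult_le_reg_r (INR m * (INR m + 1))); [nra|].
      rewrite Rmult_assoc, Rinv_l by nra. nra.
Qed.

Lemma gauss_seq_uniform_bounds (R0 : R) : 0 <= R0 ->
  exists k0 : nat, (1 <= k0)%nat /\ 2 * gauss_const R0 + 1 <= INR k0 /\
  forall z, Cmod z <= R0 -> forall N M, (k0 <= N)%nat -> (N <= M)%nat ->
    Cmod (gauss_seq z M - gauss_seq z N) <= Cmod (gauss_seq z N) * (2 * gauss_const R0 / INR N)
    /\ Cmod (gauss_seq z N) * exp (-1) <= Cmod (gauss_seq z M).
Proof.
  intro HR. pose proof (gauss_const_ge0 R0 HR) as HC. set (Cst := gauss_const R0) in *.
  destruct (exists_nat_ge (2 * R0 + 2 + 2 * Cst + 1)) as [k0 Hk0].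
  exists k0. split; [apply INR_le; change (INR 1) with 1; lra|]. split; [lra|].
  intros z Hz N M HN HM.
  assert (HNk : INR k0 <= INR N) by (apply le_INR; auto).
  assert (Hstep : forall m, (N <= m)%nat ->
    gauss_seq z (S m) = (gauss_seq z m * gauss_factor (INR (S m)) z)%C /\
    Cmod (gauss_factor (INR (S m)) z - 1) <= gauss_potential R0 (S m) - gauss_potential R0 m /\
    0 <= gauss_potential R0 (S m) - gauss_potential R0 m <= 1/2)
    by (intros m Hm; apply gauss_seq_step; auto; fold Cst; pose proof (le_INR _ _ Hm); lra).
  pose proof (product_dist_le _ _ _ _ Hstep (M - N)) as H1.
  pose proof (product_Cmod_ge _ _ _ _ Hstep (M - N)) as H2.
  replace (N + (M - N))%nat with M in * by lia.
  assert (Hd : 0 <= gauss_potential R0 M - gauss_potential R0 N <= Cst / INR N).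
  { unfold gauss_potential. fold Cst. assert (INR N <= INR M) by (apply le_INR; auto).
    assert (Cst / INR M <= Cst / INR N)
      by (unfold Rdiv; apply Rmult_le_compat_l; auto; apply Rinv_le_contravar; lra).
    assert (0 <= Cst / INR M) by (apply Rle_mult_inv_pos; lra). lra. }
  assert (Hs : Cst / INR N <= 1/2).
  { apply (Rmult_le_reg_r (INR N)); [lra|].
    unfold Rdiv. rewrite Rmult_assoc, Rinv_l by lra. lra. }
  set (D := gauss_potential R0 M - gauss_potential R0 N) in *.
  split.
  - eapply Rle_trans; [apply H1|]. apply Rmult_le_compat_l; [apply Cmod_ge_0|].
    pose proof (Rabs_exp_sub_1_le D ltac:(rewrite Rabs_pos_eq; lra)) as H.
    rewrite !Rabs_pos_eq in H by (try pose proof (exp_ineq1_le D); lra).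
    unfold Rdiv in *. lra.
  - eapply Rle_trans; [|apply H2]. apply Rmult_le_compat_l; [apply Cmod_ge_0|].
    destruct (Req_dec (-1) (- (2 * D))) as [E|E];
      [rewrite E; lra| left; apply exp_increasing; lra].
Qed.

(** * The Gamma function *)

Definition Ccv (s : nat -> C) (L : C) :=
  forall eps, 0 < eps -> exists N, forall n, (N <= n)%nat -> Cmod (s n - L) < eps.

Lemma ball_of_Cmod (x y : C) (eps : R) : Cmod (y - x) < eps -> @ball C_CS x eps y.
Proof. intro H. apply C_NormedModule_mixin_compat1. exact H. Qed.

Lemma Ccv_filterlim (s : nat -> C) (L : C) :
  Ccv s L -> @filterlim nat C_CS s eventually (@locally C_CS L).
Proof.
  intro H. apply (@filterlim_locally nat C_CS eventually _ s L).
  intro eps. destruct (H eps (cond_pos eps)) as [N HN]. exists N. intros n Hn.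
  apply ball_of_Cmod, HN. lia.
Qed.

Lemma filterlim_Ccv (s : nat -> C) (L : C) :
  @filterlim nat C_CS s eventually (@locally C_CS L) -> Ccv s L.
Proof.
  intros H eps Heps.
  pose proof (@norm_factor_gt_0 _ C_NormedModule) as Hnf.
  assert (Hp : 0 < eps / @norm_factor _ C_NormedModule) by (apply Rdiv_lt_0_compat; lra).
  destruct (proj1 (@filterlim_locally nat C_CS eventually _ s L) H (mkposreal _ Hp)) as [N HN].
  exists N. intros n Hn.
  pose proof (@norm_compat2 _ C_NormedModule _ _ _ (HN n Hn)) as Hb. simpl in Hb.
  replace (norm_factor * (eps / norm_factor)) with eps in Hb by (field; lra). exact Hb.
Qed.

Lemma lim_of_filterlim {T : Type} (F : (T -> Prop) -> Prop) (f : T -> C) (L : C) :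
  ProperFilter F -> @filterlim T C_CS f F (@locally C_CS L) -> @lim C_CS (filtermap f F) = L.
Proof.
  intros PF HL.
  assert (FF : ProperFilter (filtermap f F)) by (apply filtermap_proper_filter; auto).
  assert (Hc : cauchy (filtermap f F)) by (intro eps; exists L; apply HL, locally_ball).
  pose proof (@complete_cauchy C_CS _ FF Hc) as Hlim.
  apply (@is_filter_lim_unique _ C_NormedModule (filtermap f F) (Proper_StrongProper _ FF)).
  - intros P [eps HP]. eapply filter_imp; [|apply (Hlim eps)]. intros x Hx. apply HP, Hx.
  - exact HL.
Qed.

Lemma Ccv_lim (s : nat -> C) (L : C) : Ccv s L -> @lim C_CS (filtermap s eventually) = L.
Proof. intro H. apply lim_of_filterlim; [apply eventually_filter|apply Ccv_filterlim, H]. Qed.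

Lemma Ccv_unique (s : nat -> C) (L1 L2 : C) : Ccv s L1 -> Ccv s L2 -> L1 = L2.
Proof. intros H1 H2. rewrite <- (Ccv_lim s L1 H1). apply Ccv_lim, H2. Qed.

Lemma Ccv_of_cauchy (s : nat -> C) :
  (forall eps, 0 < eps -> exists N, forall n m, (N <= n)%nat -> (N <= m)%nat ->
     Cmod (s n - s m) < eps) ->
  exists L, Ccv s L.
Proof.
  intro H.
  destruct (proj1 (@filterlim_locally_cauchy nat C_CS eventually eventually_filter s)) as [L HL].
  - intro eps. destruct (H eps (cond_pos eps)) as [N HN].
    exists (fun n => (N <= n)%nat). split; [exists N; auto|].
    intros u v Hu Hv. apply ball_of_Cmod, HN; auto.
  - exists L. apply filterlim_Ccv, HL.
Qed.

Lemma Ccv_close (s t : nat -> C) (L : C) : Ccv s L ->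
  (forall eps, 0 < eps -> exists N, forall n, (N <= n)%nat -> Cmod (t n - s n) < eps) ->
  Ccv t L.
Proof.
  intros Hs Ht eps Heps.
  destruct (Hs (eps/2) ltac:(lra)) as [N1 H1]. destruct (Ht (eps/2) ltac:(lra)) as [N2 H2].
  exists (max N1 N2). intros n Hn.
  replace (t n - L)%C with ((t n - s n) + (s n - L))%C by ring.
  eapply Rle_lt_trans; [apply Cmod_triangle|].
  pose proof (H1 n ltac:(lia)). pose proof (H2 n ltac:(lia)). lra.
Qed.

Lemma Ccv_scal (s : nat -> C) (L a : C) : Ccv s L -> Ccv (fun n => a * s n)%C (a * L)%C.
Proof.
  intros H eps Heps. pose proof (Cmod_ge_0 a).
  destruct (H (eps / (Cmod a + 1))) as [N HN]; [apply Rdiv_lt_0_compat; lra|].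
  exists N. intros n Hn.
  replace (a * s n - a * L)%C with (a * (s n - L))%C by ring.
  rewrite Cmod_mult. pose proof (HN n Hn) as Hs. pose proof (Cmod_ge_0 (s n - L)).
  apply (Rmult_lt_compat_l (Cmod a + 1)) in Hs; [|lra].
  replace ((Cmod a + 1) * (eps / (Cmod a + 1))) with eps in Hs by (field; lra). nra.
Qed.

Lemma Ccv_subseq_double (s : nat -> C) (L : C) : Ccv s L -> Ccv (fun n => s (2 * n)%nat) L.
Proof. intros H eps Heps. destruct (H eps Heps) as [N HN]. exists N. intros n Hn. apply HN. lia. Qed.

Lemma Ccv_Cmod (s : nat -> C) (L : C) : Ccv s L -> is_lim_seq (fun n => Cmod (s n)) (Cmod L).
Proof.
  intro H. apply is_lim_seq_Reals. intros eps Heps.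
  destruct (H eps Heps) as [N HN]. exists N. intros n Hn.
  unfold R_dist. apply Rle_lt_trans with (Cmod (s n - L)); [|apply HN; lia].
  apply Rabs_le. split.
  - pose proof (Cmod_triangle (L - s n) (s n)) as Ht. replace (L - s n + s n)%C with L in Ht by ring.
    replace (L - s n)%C with (- (s n - L))%C in Ht by ring. rewrite Cmod_opp in Ht. lra.
  - pose proof (Cmod_triangle (s n - L) L) as Ht. replace (s n - L + L)%C with (s n) in Ht by ring. lra.
Qed.

Lemma Cmod_limit_sub_le (s : nat -> C) (L a : C) (b : R) (N0 : nat) : Ccv s L ->
  (forall n, (N0 <= n)%nat -> Cmod (s n - a) <= b) -> Cmod (L - a) <= b.
Proof.
  intros H Hb. apply Rnot_lt_le. intro Hlt.
  destruct (H (Cmod (L - a) - b) ltac:(lra)) as [N HN].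
  pose proof (HN (max N N0) ltac:(lia)). pose proof (Hb (max N N0) ltac:(lia)).
  pose proof (Cmod_triangle (- (s (max N N0) - L)) (s (max N N0) - a)) as Ht.
  replace (- (s (max N N0) - L) + (s (max N N0) - a))%C with (L - a)%C in Ht by ring.
  rewrite Cmod_opp in Ht. lra.
Qed.

Lemma Cmod_limit_ge (s : nat -> C) (L : C) (b : R) (N0 : nat) : Ccv s L ->
  (forall n, (N0 <= n)%nat -> b <= Cmod (s n)) -> b <= Cmod L.
Proof.
  intros H Hb. apply Rnot_lt_le. intro Hlt.
  destruct (H (b - Cmod L) ltac:(lra)) as [N HN].
  pose proof (HN (max N N0) ltac:(lia)). pose proof (Hb (max N N0) ltac:(lia)).
  pose proof (Cmod_triangle (s (max N N0) - L) L) as Ht.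
  replace (s (max N N0) - L + L)%C with (s (max N N0)) in Ht by ring. lra.
Qed.

Lemma gauss_seq_cv (z : C) : Ccv (gauss_seq z) (Gamma z).
Proof.
  pose proof (gauss_const_ge0 (Cmod z) (Cmod_ge_0 z)) as HC.
  set (Cst := gauss_const (Cmod z)) in *.
  destruct (gauss_seq_uniform_bounds (Cmod z) (Cmod_ge_0 z)) as [k0 [Hk1 [Hk2 H]]].
  fold Cst in Hk2, H.
  set (B := 2 * Cmod (gauss_seq z k0)).
  assert (HB : forall n, (k0 <= n)%nat -> Cmod (gauss_seq z n) <= B).
  { intros n Hn. destruct (H z (Rle_refl _) k0 n (Nat.le_refl _) Hn) as [H1 _].
    assert (2 * Cst / INR k0 <= 1).
    { apply (Rmult_le_reg_r (INR k0)); [lra|].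
      unfold Rdiv. rewrite Rmult_assoc, Rinv_l by lra. lra. }
    pose proof (Cmod_triangle (gauss_seq z n - gauss_seq z k0) (gauss_seq z k0)) as Ht.
    replace (gauss_seq z n - gauss_seq z k0 + gauss_seq z k0)%C with (gauss_seq z n) in Ht by ring.
    pose proof (Cmod_ge_0 (gauss_seq z k0)). unfold B. nra. }
  assert (HB0 : 0 <= B) by (unfold B; pose proof (Cmod_ge_0 (gauss_seq z k0)); lra).
  destruct (Ccv_of_cauchy (gauss_seq z)) as [L HL].
  - intros eps Heps.
    destruct (exists_nat_ge_above (4 * B * Cst / eps) k0) as [N [HN0 HN]].
    assert (HNp : 0 < INR N) by (pose proof (le_INR _ _ HN0); lra).
    assert (Hsmall : 2 * (B * (2 * Cst / INR N)) < eps).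
    { apply (Rmult_lt_compat_r eps) in HN; [|lra].
      unfold Rdiv in HN. rewrite Rmult_assoc, Rinv_l, Rmult_1_r in HN by lra.
      apply (Rmult_lt_reg_r (INR N)); [lra|].
      replace (2 * (B * (2 * Cst / INR N)) * INR N) with (4 * B * Cst) by (field; lra). lra. }
    assert (Hclose : forall n, (N <= n)%nat -> Cmod (gauss_seq z n - gauss_seq z N) <= B * (2 * Cst / INR N)).
    { intros n Hn. destruct (H z (Rle_refl _) N n HN0 Hn) as [H1 _].
      eapply Rle_trans; [exact H1|]. apply Rmult_le_compat_r; [apply Rle_mult_inv_pos; lra|].
      apply HB; auto. }
    exists N. intros n m Hn Hm.
    replace (gauss_seq z n - gauss_seq z m)%C
      with ((gauss_seq z n - gauss_seq z N) + - (gauss_seq z m - gauss_seq z N))%C by ring.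
    eapply Rle_lt_trans; [apply Cmod_triangle|]. rewrite Cmod_opp.
    pose proof (Hclose n Hn). pose proof (Hclose m Hm). lra.
  - unfold Gamma. rewrite (Ccv_lim _ _ HL). exact HL.
Qed.

Lemma Gamma_gauss_bounds (R0 : R) : 0 <= R0 ->
  exists k0 : nat, (1 <= k0)%nat /\ 2 * gauss_const R0 + 1 <= INR k0 /\
  forall z, Cmod z <= R0 -> forall N, (k0 <= N)%nat ->
    Cmod (Gamma z - gauss_seq z N) <= Cmod (gauss_seq z N) * (2 * gauss_const R0 / INR N)
    /\ Cmod (gauss_seq z N) * exp (-1) <= Cmod (Gamma z).
Proof.
  intro HR. destruct (gauss_seq_uniform_bounds R0 HR) as [k0 [Hk1 [Hk2 H]]].
  exists k0. do 2 (split; [auto|]). intros z Hz N HN. split.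
  - apply (Cmod_limit_sub_le (gauss_seq z) _ _ _ N (gauss_seq_cv z)).
    intros n Hn. apply (H z Hz N n HN Hn).
  - apply (Cmod_limit_ge (gauss_seq z) _ _ N (gauss_seq_cv z)).
    intros n Hn. apply (H z Hz N n HN Hn).
Qed.

Lemma gauss_seq_neq0 (z : C) (N : nat) : poch_prod z N <> RtoC 0 -> gauss_seq z N <> RtoC 0.
Proof.
  intro H. unfold gauss_seq, Cdiv. apply Cmult_neq_0; [apply Cmult_neq_0|].
  - intro E. apply RtoC_inj in E. pose proof (lt_0_INR _ (lt_O_fact N)). lra.
  - apply cexp_neq0.
  - intro E. assert (E1 : (poch_prod z N * / poch_prod z N)%C = RtoC 0) by (rewrite E; ring).
    rewrite Cinv_r in E1 by auto. apply RtoC_inj in E1. lra.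
Qed.

Lemma Gamma_neq0_of_poch (z : C) : (forall N, poch_prod z N <> RtoC 0) -> Gamma z <> RtoC 0.
Proof.
  intros Hp E. destruct (Gamma_gauss_bounds (Cmod z) (Cmod_ge_0 z)) as [k0 [_ [_ H]]].
  destruct (H z (Rle_refl _) k0 (Nat.le_refl _)) as [_ H2].
  rewrite E, Cmod_0 in H2.
  assert (0 < Cmod (gauss_seq z k0)) by (apply Cmod_gt_0, gauss_seq_neq0, Hp).
  pose proof (exp_pos (-1)). nra.
Qed.

Lemma poch_prod_neq0 (z : C) (N : nat) :
  (forall j, (j <= N)%nat -> (z + RtoC (INR j))%C <> RtoC 0) -> poch_prod z N <> RtoC 0.
Proof.
  intro H. induction N.
  - simpl. intro E. apply (H 0%nat (le_n 0)). rewrite E. apply C_ext; simpl; ring.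
  - rewrite poch_prod_succ. apply Cmult_neq_0; auto.
Qed.

Lemma poch_prod_neq0_Re_pos (z : C) (N : nat) : 0 < Re z -> poch_prod z N <> RtoC 0.
Proof.
  intro H. apply poch_prod_neq0. intros j _ E.
  apply (f_equal fst) in E. simpl in E. unfold Re in H. pose proof (pos_INR j). lra.
Qed.

Lemma Gamma_neq0 (z : C) : 0 < Re z -> Gamma z <> RtoC 0.
Proof. intro H. apply Gamma_neq0_of_poch. intro N. apply poch_prod_neq0_Re_pos, H. Qed.

Definition nonpole (z : C) := forall j : nat, (z + RtoC (INR j))%C <> RtoC 0.

Lemma nonpole_Im (x y : R) : y <> 0 -> nonpole (x, y).
Proof. intros Hy j E. apply Hy. apply (f_equal snd) in E. simpl in E. lra. Qed.

Lemma nonpole_add_nat (z : C) (m : nat) : nonpole z -> nonpole (z + RtoC (INR m))%C.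
Proof. intros H j E. apply (H (m + j)%nat). rewrite <- E, plus_INR, RtoC_plus. ring. Qed.

Lemma nonpole_neq0 (z : C) : nonpole z -> z <> RtoC 0.
Proof. intros H E. apply (H 0%nat). rewrite E. apply C_ext; simpl; ring. Qed.

Lemma poch_prod_shift (z : C) (N : nat) :
  (z * poch_prod (z + 1) N = poch_prod z N * (z + RtoC (INR (S N))))%C.
Proof.
  induction N.
  - apply C_ext; simpl; ring.
  - rewrite !poch_prod_succ.
    transitivity ((z * poch_prod (z + 1) N) * (z + 1 + RtoC (INR (S N))))%C; [ring|].
    rewrite IHN, (S_INR (S N)). apply C_ext; simpl; ring.
Qed.

Lemma gauss_seq_shift (z : C) (N : nat) : nonpole z -> (1 <= N)%nat ->
  gauss_seq (z + 1) N = (z * gauss_seq z N * (RtoC (INR N) / (z + RtoC (INR (S N)))))%C.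
Proof.
  intros Hz HN. unfold gauss_seq.
  rewrite cpow_add, cpow_1 by (apply lt_0_INR; lia).
  assert (Hp : poch_prod z N <> RtoC 0) by (apply poch_prod_neq0; auto).
  pose proof (nonpole_neq0 z Hz).
  assert (HzN : (z + RtoC (INR (S N)))%C <> RtoC 0) by apply Hz.
  assert (Hp1 : poch_prod (z + 1) N = (poch_prod z N * (z + RtoC (INR (S N))) / z)%C)
    by (rewrite <- poch_prod_shift; field; auto).
  rewrite Hp1. field. repeat split; auto.
Qed.

Lemma Cmod_gauss_seq_succ_sub_le (z : C) (n : nat) :
  nonpole z -> (1 <= n)%nat -> Cmod z < INR n + 1 ->
  Cmod (gauss_seq (z + 1) n - z * gauss_seq z n)
  <= Cmod z * Cmod (gauss_seq z n) * Cmod (z + 1) / (INR n + 1 - Cmod z).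
Proof.
  intros Hz Hn Hlt.
  assert (HzN : (z + RtoC (INR (S n)))%C <> RtoC 0) by apply Hz.
  rewrite gauss_seq_shift by auto.
  replace (z * gauss_seq z n * (RtoC (INR n) / (z + RtoC (INR (S n)))) - z * gauss_seq z n)%C
    with (- (z * gauss_seq z n * (z + 1) / (z + RtoC (INR (S n)))))%C
    by (replace (RtoC (INR n)) with ((z + RtoC (INR (S n))) - (z + 1))%C
          by (rewrite S_INR, RtoC_plus; ring); field; auto).
  rewrite Cmod_opp. unfold Cdiv. rewrite !Cmod_mult, Cmod_inv by auto.
  assert (Hden : INR n + 1 - Cmod z <= Cmod (z + RtoC (INR (S n))))
    by (rewrite <- S_INR; apply Cmod_add_RtoC_ge, pos_INR).
  apply Rmult_le_compat_l; [repeat apply Rmult_le_pos; apply Cmod_ge_0|].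
  apply Rinv_le_contravar; lra.
Qed.

Lemma Gamma_succ (z : C) : nonpole z -> Gamma (z + 1)%C = (z * Gamma z)%C.
Proof.
  intro Hz.
  apply (Ccv_unique (gauss_seq (z + 1))); [apply gauss_seq_cv|].
  apply (Ccv_close (fun n => z * gauss_seq z n)%C); [apply Ccv_scal, gauss_seq_cv|].
  intros eps Heps.
  destruct (gauss_seq_cv z 1 ltac:(lra)) as [k1 HB].
  set (A := Cmod z * (Cmod (Gamma z) + 1) * Cmod (z + 1)).
  assert (HA : 0 <= A).
  { unfold A. pose proof (Cmod_ge_0 z); pose proof (Cmod_ge_0 (z + 1)).
    pose proof (Cmod_ge_0 (Gamma z)). apply Rmult_le_pos; [apply Rmult_le_pos|]; lra. }
  destruct (exists_nat_ge_above (A / eps + Cmod z + 1) (S k1)) as [N [HN1 HN]].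
  exists N. intros n Hn.
  pose proof (le_INR N n Hn) as HNn.
  assert (HAe : 0 <= A / eps) by (apply Rle_mult_inv_pos; lra).
  assert (Hpos : A / eps < INR n + 1 - Cmod z) by lra.
  assert (Hg : Cmod (gauss_seq z n) <= Cmod (Gamma z) + 1).
  { pose proof (HB n ltac:(lia)) as H1.
    pose proof (Cmod_triangle (gauss_seq z n - Gamma z) (Gamma z)) as Ht.
    replace (gauss_seq z n - Gamma z + Gamma z)%C with (gauss_seq z n) in Ht by ring. lra. }
  eapply Rle_lt_trans; [apply Cmod_gauss_seq_succ_sub_le; [exact Hz|lia|lra]|].
  apply Rle_lt_trans with (A / (INR n + 1 - Cmod z)).
  - unfold Rdiv. apply Rmult_le_compat_r; [apply Rlt_le, Rinv_0_lt_compat; lra|].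
    unfold A. pose proof (Cmod_ge_0 z). pose proof (Cmod_ge_0 (z + 1)).
    apply Rmult_le_compat_r; [apply Cmod_ge_0|]. apply Rmult_le_compat_l; lra.
  - apply (Rmult_lt_reg_r (INR n + 1 - Cmod z)); [lra|].
    unfold Rdiv. rewrite Rmult_assoc, Rinv_l, Rmult_1_r by lra.
    apply (Rmult_lt_compat_r eps) in Hpos; [|lra]. unfold Rdiv in Hpos.
    rewrite Rmult_assoc, Rinv_l, Rmult_1_r in Hpos by lra. lra.
Qed.

Lemma Gamma_add_nat (z : C) (m : nat) : nonpole z ->
  Gamma (z + RtoC (INR (S m)))%C = (Gamma z * poch_prod z m)%C.
Proof.
  intro Hz. induction m.
  - change (z + RtoC (INR 1))%C with (z + 1)%C. rewrite Gamma_succ by auto. simpl. ring.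
  - replace (z + RtoC (INR (S (S m))))%C with ((z + RtoC (INR (S m))) + 1)%C
      by (rewrite (S_INR (S m)), RtoC_plus; ring).
    rewrite Gamma_succ, IHm, poch_prod_succ by (apply nonpole_add_nat; auto). ring.
Qed.

(** * Continuity of the Gamma function *)

Definition Ccontinuity_pt (f : R -> C) (t0 : R) :=
  continuity_pt (fun t => fst (f t)) t0 /\ continuity_pt (fun t => snd (f t)) t0.

Definition Cmod_continuous_at (f : R -> C) (t0 : R) :=
  forall eps, 0 < eps -> exists del, 0 < del /\
    forall t, Rabs (t - t0) < del -> Cmod (f t - f t0) < eps.

Lemma continuity_pt_eps (g : R -> R) (t0 : R) : continuity_pt g t0 ->
  forall eps, 0 < eps -> exists del, 0 < del /\
    forall t, Rabs (t - t0) < del -> Rabs (g t - g t0) < eps.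
Proof.
  intros H eps Heps. destruct (H eps Heps) as [del [Hd Ht]].
  exists del. split; auto. intros t Htt.
  destruct (Req_dec t t0) as [->|E].
  - rewrite Rminus_diag, Rabs_R0. auto.
  - apply (Ht t). repeat split; auto.
Qed.

Lemma Ccontinuity_pt_Cmod (f : R -> C) (t0 : R) :
  Ccontinuity_pt f t0 -> Cmod_continuous_at f t0.
Proof.
  intros [H1 H2] eps Heps.
  destruct (continuity_pt_eps _ _ H1 (eps/2) ltac:(lra)) as [d1 [Hd1 P1]].
  destruct (continuity_pt_eps _ _ H2 (eps/2) ltac:(lra)) as [d2 [Hd2 P2]].
  exists (Rmin d1 d2). split; [apply Rmin_pos; auto|]. intros t Ht.
  eapply Rle_lt_trans; [apply Cmod_le_Rabs_parts|].
  pose proof (P1 t ltac:(pose proof (Rmin_l d1 d2); lra)).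
  pose proof (P2 t ltac:(pose proof (Rmin_r d1 d2); lra)).
  destruct (f t), (f t0). simpl in *. unfold Rminus in *. lra.
Qed.

Lemma Cmod_continuous_at_Ccontinuity_pt (f : R -> C) (t0 : R) :
  Cmod_continuous_at f t0 -> Ccontinuity_pt f t0.
Proof.
  intro H. split; intros eps Heps; destruct (H eps Heps) as [del [Hd Ht]];
    exists del; split; auto; intros t [_ Htt]; simpl in *; unfold R_dist in *;
    eapply Rle_lt_trans; try exact (Ht t Htt).
  - replace (fst (f t) - fst (f t0)) with (fst (f t - f t0)%C)
      by (destruct (f t), (f t0); simpl; ring).
    apply Rabs_re_le_Cmod.
  - replace (snd (f t) - snd (f t0)) with (snd (f t - f t0)%C)
      by (destruct (f t), (f t0); simpl; ring).
    apply Rabs_im_le_Cmod.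
Qed.

Lemma Ccontinuity_pt_ext (f g : R -> C) t0 :
  (forall t, f t = g t) -> Ccontinuity_pt f t0 -> Ccontinuity_pt g t0.
Proof.
  intros E [H1 H2]. split.
  - eapply continuity_pt_ext; [|exact H1]. intro t. simpl. rewrite E. reflexivity.
  - eapply continuity_pt_ext; [|exact H2]. intro t. simpl. rewrite E. reflexivity.
Qed.

Lemma Ccontinuity_pt_const (c : C) t0 : Ccontinuity_pt (fun _ => c) t0.
Proof. split; apply continuity_pt_const; intros x y; reflexivity. Qed.

Lemma Ccontinuity_pt_linear (x a : R) t0 : Ccontinuity_pt (fun t => (x, a * t) : C) t0.
Proof.
  split; simpl; [apply continuity_pt_const; intros u v; reflexivity|].
  apply (continuity_pt_mult (fun _ => a) (fun t => t));
    [apply continuity_pt_const; intros u v; reflexivity| apply derivable_continuous_pt, derivable_pt_id].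
Qed.

Lemma Ccontinuity_pt_plus (f g : R -> C) t0 :
  Ccontinuity_pt f t0 -> Ccontinuity_pt g t0 -> Ccontinuity_pt (fun t => f t + g t)%C t0.
Proof.
  intros [] []. split; simpl;
    [apply (continuity_pt_plus (fun t => fst (f t)) (fun t => fst (g t)))
    |apply (continuity_pt_plus (fun t => snd (f t)) (fun t => snd (g t)))]; auto.
Qed.

Lemma Ccontinuity_pt_opp (f : R -> C) t0 :
  Ccontinuity_pt f t0 -> Ccontinuity_pt (fun t => - f t)%C t0.
Proof.
  intros []. split; simpl;
    [apply (continuity_pt_opp (fun t => fst (f t)))|apply (continuity_pt_opp (fun t => snd (f t)))];
    auto.
Qed.

Lemma Ccontinuity_pt_minus (f g : R -> C) t0 :
  Ccontinuity_pt f t0 -> Ccontinuity_pt g t0 -> Ccontinuity_pt (fun t => f t - g t)%C t0.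
Proof. intros. apply Ccontinuity_pt_plus, Ccontinuity_pt_opp; auto. Qed.

Lemma Ccontinuity_pt_mult (f g : R -> C) t0 :
  Ccontinuity_pt f t0 -> Ccontinuity_pt g t0 -> Ccontinuity_pt (fun t => f t * g t)%C t0.
Proof.
  intros [] []. split; simpl.
  - apply (continuity_pt_minus (fun t => fst (f t) * fst (g t)) (fun t => snd (f t) * snd (g t)));
      apply (continuity_pt_mult (fun t => _ (f t)) (fun t => _ (g t))); auto.
  - apply (continuity_pt_plus (fun t => fst (f t) * snd (g t)) (fun t => snd (f t) * fst (g t)));
      apply (continuity_pt_mult (fun t => _ (f t)) (fun t => _ (g t))); auto.
Qed.

Lemma Ccontinuity_pt_inv (f : R -> C) t0 :
  Ccontinuity_pt f t0 -> f t0 <> RtoC 0 -> Ccontinuity_pt (fun t => / f t)%C t0.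
Proof.
  intros [H1 H2] Hn.
  set (d := fun t => fst (f t) * (fst (f t) * 1) + snd (f t) * (snd (f t) * 1)).
  assert (Hd : d t0 <> 0).
  { intro E. apply Hn. unfold d in E. destruct (f t0) as [a b]. simpl in E.
    assert (a = 0) by nra. assert (b = 0) by nra. subst. reflexivity. }
  assert (Hcd : continuity_pt d t0).
  { unfold d. apply (continuity_pt_plus (fun t => fst (f t) * (fst (f t) * 1))
                                        (fun t => snd (f t) * (snd (f t) * 1)));
    apply (continuity_pt_mult (fun t => _ (f t)) (fun t => _ (f t) * 1)); auto;
    apply (continuity_pt_mult (fun t => _ (f t)) (fun _ => 1)); auto;
    apply continuity_pt_const; intros u v; reflexivity. }
  split; simpl.
  - apply (continuity_pt_div (fun t => fst (f t)) d); auto.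
  - apply (continuity_pt_div (fun t => - snd (f t)) d); auto.
    apply (continuity_pt_opp (fun t => snd (f t))); auto.
Qed.

Lemma Ccontinuity_pt_div (f g : R -> C) t0 :
  Ccontinuity_pt f t0 -> Ccontinuity_pt g t0 -> g t0 <> RtoC 0 ->
  Ccontinuity_pt (fun t => f t / g t)%C t0.
Proof. intros. apply Ccontinuity_pt_mult, Ccontinuity_pt_inv; auto. Qed.

Lemma Ccontinuity_pt_cexp (f : R -> C) t0 :
  Ccontinuity_pt f t0 -> Ccontinuity_pt (fun t => cexp (f t)) t0.
Proof.
  intros [H1 H2].
  assert (He : continuity_pt (fun t => exp (fst (f t))) t0)
    by (apply (continuity_pt_comp (fun t => fst (f t)) exp); auto;
        apply derivable_continuous_pt, derivable_pt_exp).
  assert (Hc : continuity_pt (fun t => cos (snd (f t))) t0)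
    by (apply (continuity_pt_comp (fun t => snd (f t)) cos); auto; apply continuity_cos).
  assert (Hs : continuity_pt (fun t => sin (snd (f t))) t0)
    by (apply (continuity_pt_comp (fun t => snd (f t)) sin); auto; apply continuity_sin).
  assert (H0 : continuity_pt (fun _ => 0) t0) by (apply continuity_pt_const; intros u v; reflexivity).
  unfold cexp, Re, Im. split; simpl.
  - apply (continuity_pt_minus (fun t => exp (fst (f t)) * cos (snd (f t)))
                               (fun t => 0 * sin (snd (f t))));
      apply (continuity_pt_mult (fun t => _) (fun t => _)); auto.
  - apply (continuity_pt_plus (fun t => exp (fst (f t)) * sin (snd (f t)))
                              (fun t => 0 * cos (snd (f t))));
      apply (continuity_pt_mult (fun t => _) (fun t => _)); auto.
Qed.

Lemma Ccontinuity_pt_cpow (a : R) (f : R -> C) t0 :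
  Ccontinuity_pt f t0 -> Ccontinuity_pt (fun t => cpow a (f t)) t0.
Proof.
  intro H. apply Ccontinuity_pt_cexp, Ccontinuity_pt_mult; auto. apply Ccontinuity_pt_const.
Qed.

Lemma Ccontinuity_pt_poch_prod (f : R -> C) t0 N :
  Ccontinuity_pt f t0 -> Ccontinuity_pt (fun t => poch_prod (f t) N) t0.
Proof.
  intro H. induction N; auto.
  apply (Ccontinuity_pt_mult (fun t => poch_prod (f t) N) (fun t => f t + RtoC (INR (S N)))%C); auto.
  apply Ccontinuity_pt_plus; auto. apply Ccontinuity_pt_const.
Qed.

Lemma Ccontinuity_pt_gauss_seq (f : R -> C) t0 N :
  Ccontinuity_pt f t0 -> poch_prod (f t0) N <> RtoC 0 ->
  Ccontinuity_pt (fun t => gauss_seq (f t) N) t0.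
Proof.
  intros H Hp. unfold gauss_seq.
  apply Ccontinuity_pt_div; [|apply Ccontinuity_pt_poch_prod|]; auto.
  apply Ccontinuity_pt_mult; [apply Ccontinuity_pt_const| apply Ccontinuity_pt_cpow; auto].
Qed.

Lemma Gamma_uniform_approx (R0 B eps : R) : 0 <= R0 -> 0 < eps ->
  exists N, forall z, Cmod z <= R0 ->
    Cmod (gauss_seq z N) <= 3 * Cmod (Gamma z) /\
    (Cmod (gauss_seq z N) <= B -> Cmod (Gamma z - gauss_seq z N) < eps).
Proof.
  intros HR Heps.
  destruct (Gamma_gauss_bounds R0 HR) as [k0 [Hk1 [_ HG]]].
  pose proof (gauss_const_ge0 R0 HR) as HC. set (Cst := gauss_const R0) in *.
  destruct (exists_nat_ge_above (2 * Cst * Rabs B / eps) k0) as [N [HkN HN]].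
  assert (HNp : 0 < INR N) by (pose proof (le_INR 1 k0 Hk1); pose proof (le_INR _ _ HkN); simpl in *; lra).
  exists N. intros z Hz. destruct (HG z Hz N HkN) as [E1 L1].
  pose proof (Cmod_ge_0 (gauss_seq z N)). split.
  - assert (He : exp (-1) * exp 1 = 1) by (rewrite <- exp_plus; replace (-1 + 1) with 0 by ring; apply exp_0).
    pose proof exp_le_3. pose proof (exp_pos 1). pose proof (exp_pos (-1)).
    assert (Cmod (gauss_seq z N) = Cmod (gauss_seq z N) * exp (-1) * exp 1)
      by (rewrite Rmult_assoc, He; ring).
    assert (Cmod (gauss_seq z N) * exp (-1) * exp 1 <= Cmod (Gamma z) * exp 1)
      by (apply Rmult_le_compat_r; lra).
    pose proof (Cmod_ge_0 (Gamma z)). nra.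
  - intro HB. eapply Rle_lt_trans; [exact E1|].
    apply Rle_lt_trans with (Rabs B * (2 * Cst / INR N)).
    + apply Rmult_le_compat_r; [apply Rle_mult_inv_pos; lra|]. pose proof (Rle_abs B). lra.
    + apply (Rmult_lt_compat_r eps) in HN; [|lra].
      unfold Rdiv in *. rewrite Rmult_assoc, Rinv_l, Rmult_1_r in HN by lra.
      apply (Rmult_lt_reg_r (INR N)); [lra|].
      replace (Rabs B * (2 * Cst * / INR N) * INR N) with (2 * Cst * Rabs B) by (field; lra).
      lra.
Qed.

(* [Gamma] is a locally uniform limit of the continuous functions [gauss_seq _ N]. *)
Lemma Gamma_continuous_at (f : R -> C) (t0 : R) :
  Ccontinuity_pt f t0 -> (forall N, poch_prod (f t0) N <> RtoC 0) ->
  Cmod_continuous_at (fun t => Gamma (f t)) t0.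
Proof.
  intros Hf Hp eps Heps.
  set (R0 := Cmod (f t0) + 1).
  assert (HR0 : 0 <= R0) by (unfold R0; pose proof (Cmod_ge_0 (f t0)); lra).
  set (B := 3 * Cmod (Gamma (f t0)) + 1).
  destruct (Gamma_uniform_approx R0 B (eps/3) HR0 ltac:(lra)) as [N HN].
  destruct (Ccontinuity_pt_Cmod _ _ (Ccontinuity_pt_gauss_seq f t0 N Hf (Hp N))
              (Rmin 1 (eps/3)) ltac:(apply Rmin_pos; lra)) as [d1 [Hd1 P1]].
  destruct (Ccontinuity_pt_Cmod _ _ Hf 1 ltac:(lra)) as [d2 [Hd2 P2]].
  exists (Rmin d1 d2). split; [apply Rmin_pos; auto|]. intros t Ht.
  pose proof (P1 t ltac:(pose proof (Rmin_l d1 d2); lra)) as Q1.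
  pose proof (P2 t ltac:(pose proof (Rmin_r d1 d2); lra)) as Q2.
  pose proof (Rmin_l 1 (eps/3)). pose proof (Rmin_r 1 (eps/3)).
  assert (Hw : Cmod (f t) <= R0).
  { unfold R0. pose proof (Cmod_triangle (f t - f t0) (f t0)) as Ht'.
    replace (f t - f t0 + f t0)%C with (f t) in Ht' by ring. lra. }
  assert (Hw0 : Cmod (f t0) <= R0) by (unfold R0; lra).
  destruct (HN (f t0) Hw0) as [G0 A0].
  destruct (HN (f t) Hw) as [_ A1].
  assert (Hgt : Cmod (gauss_seq (f t) N) <= B).
  { pose proof (Cmod_triangle (gauss_seq (f t) N - gauss_seq (f t0) N) (gauss_seq (f t0) N)) as Ht'.
    replace (gauss_seq (f t) N - gauss_seq (f t0) N + gauss_seq (f t0) N)%C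
      with (gauss_seq (f t) N) in Ht' by ring.
    unfold B. lra. }
  pose proof (A1 Hgt). pose proof (A0 ltac:(unfold B; lra)).
  replace (Gamma (f t) - Gamma (f t0))%C with
    ((Gamma (f t) - gauss_seq (f t) N) + (gauss_seq (f t) N - gauss_seq (f t0) N)
     + - (Gamma (f t0) - gauss_seq (f t0) N))%C by ring.
  eapply Rle_lt_trans; [apply Cmod_triangle|]. rewrite Cmod_opp.
  eapply Rle_lt_trans; [apply Rplus_le_compat_r, Cmod_triangle|]. lra.
Qed.

Lemma Ccontinuity_pt_Gamma (f : R -> C) (t0 : R) :
  Ccontinuity_pt f t0 -> 0 < Re (f t0) -> Ccontinuity_pt (fun t => Gamma (f t)) t0.
Proof.
  intros Hf Hr. apply Cmod_continuous_at_Ccontinuity_pt, Gamma_continuous_at; auto.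
  intro N. apply poch_prod_neq0_Re_pos, Hr.
Qed.

(** * Moduli of Gauss's products and the duplication formula *)

Fixpoint poch_sqnorm (x y : R) (N : nat) : R :=
  match N with
  | O => x ^ 2 + y ^ 2
  | S m => poch_sqnorm x y m * ((x + INR (S m)) ^ 2 + y ^ 2)
  end.

Definition damp (y t : R) := 1 + y ^ 2 / t ^ 2.

Fixpoint damp_prod (x y : R) (N : nat) : R :=
  match N with
  | O => damp y x
  | S m => damp_prod x y m * damp y (x + INR (S m))
  end.

Lemma Cmod_poch_prod_sqr (x y : R) (N : nat) :
  Cmod (poch_prod (x, y) N) ^ 2 = poch_sqnorm x y N.
Proof.
  induction N.
  - apply Cmod_pair_sqr.
  - rewrite poch_prod_succ. cbn [poch_sqnorm]. rewrite Cmod_mult, Rpow_mult_distr, IHN.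
    replace ((x, y) + RtoC (INR (S N)))%C with (x + INR (S N), y) by (apply C_ext; simpl; ring).
    rewrite Cmod_pair_sqr. reflexivity.
Qed.

Lemma poch_sqnorm_pos (x y : R) (N : nat) : 0 < x -> 0 < poch_sqnorm x y N.
Proof.
  intro Hx. induction N; cbn [poch_sqnorm]; pose proof (pow2_ge_0 y).
  - pose proof (pow_lt x 2 Hx). lra.
  - pose proof (pos_INR (S N)). apply Rmult_lt_0_compat; auto.
    pose proof (pow_lt (x + INR (S N)) 2 ltac:(lra)). lra.
Qed.

Lemma damp_ge_1 (y t : R) : t <> 0 -> 1 <= damp y t.
Proof.
  intro. unfold damp.
  assert (0 <= y ^ 2 / t ^ 2) by (apply Rle_mult_inv_pos; [nra| apply pow2_gt_0; auto]). lra.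
Qed.

Lemma damp_le_2 (y t : R) : y ^ 2 <= t ^ 2 -> t <> 0 -> damp y t <= 2.
Proof.
  intros H Ht. unfold damp. pose proof (pow2_gt_0 t Ht).
  assert (y ^ 2 / t ^ 2 <= 1).
  { apply (Rmult_le_reg_r (t ^ 2)); auto. unfold Rdiv. rewrite Rmult_assoc, Rinv_l by lra. lra. }
  lra.
Qed.

Lemma damp_prod_pos (x y : R) (N : nat) : 0 < x -> 0 < damp_prod x y N.
Proof.
  intro Hx. induction N; cbn [damp_prod].
  - pose proof (damp_ge_1 y x ltac:(lra)); lra.
  - pose proof (pos_INR (S N)). pose proof (damp_ge_1 y (x + INR (S N)) ltac:(lra)). nra.
Qed.

Lemma damp_prod_0 (x : R) (N : nat) : 0 < x -> damp_prod x 0 N = 1.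
Proof.
  intro Hx. induction N; cbn [damp_prod]; unfold damp.
  - field. lra.
  - rewrite IHN. pose proof (pos_INR (S N)). field. lra.
Qed.

Lemma poch_sqnorm_damp_prod (x y : R) (N : nat) : 0 < x ->
  poch_sqnorm x y N = poch_sqnorm x 0 N * damp_prod x y N.
Proof.
  intro Hx. induction N; cbn [poch_sqnorm damp_prod]; unfold damp.
  - field. lra.
  - rewrite IHN. pose proof (pos_INR (S N)). field. lra.
Qed.

Lemma damp_log_convex (y t : R) : 1 <= t ->
  damp y t ^ 2 <= damp y (t - 1/2) * damp y (t + 1/2).
Proof.
  intro Ht. unfold damp. set (a := t - 1/2). set (b := t + 1/2). set (Y := y ^ 2).
  assert (Ha : 0 < a) by (unfold a; lra). assert (Hb : 0 < b) by (unfold b; lra).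
  assert (HY : 0 <= Y) by (unfold Y; nra).
  assert (Et : t = (a + b) / 2) by (unfold a, b; field).
  assert (H1 : 2 / t ^ 2 <= 1 / a ^ 2 + 1 / b ^ 2).
  { rewrite Et.
    assert (E : 1 / a ^ 2 + 1 / b ^ 2 - 2 / ((a + b) / 2) ^ 2
                = ((a - b) ^ 2 * (a ^ 2 + b ^ 2 + 4 * a * b)) / (a ^ 2 * b ^ 2 * (a + b) ^ 2))
      by (field; lra).
    assert (0 <= ((a - b) ^ 2 * (a ^ 2 + b ^ 2 + 4 * a * b)) / (a ^ 2 * b ^ 2 * (a + b) ^ 2)).
    { apply Rle_mult_inv_pos; [pose proof (pow2_ge_0 (a - b)); assert (0 < a * b) by nra; nra|].
      apply Rmult_lt_0_compat; [apply Rmult_lt_0_compat|]; apply pow2_gt_0; lra. }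
    lra. }
  assert (H2 : 1 / t ^ 4 <= 1 / (a ^ 2 * b ^ 2)).
  { apply Rmult_le_compat_l; [lra|]. apply Rinv_le_contravar.
    - apply Rmult_lt_0_compat; apply pow2_gt_0; lra.
    - assert (a * b <= t ^ 2) by (unfold a, b; nra). assert (0 < a * b) by nra.
      replace (t ^ 4) with (t ^ 2 * t ^ 2) by ring.
      replace (a ^ 2 * b ^ 2) with ((a * b) * (a * b)) by ring. nra. }
  replace ((1 + Y / t ^ 2) ^ 2) with (1 + Y * (2 / t ^ 2) + Y ^ 2 * (1 / t ^ 4)) by (field; lra).
  replace ((1 + Y / a ^ 2) * (1 + Y / b ^ 2))
    with (1 + Y * (1 / a ^ 2 + 1 / b ^ 2) + Y ^ 2 * (1 / (a ^ 2 * b ^ 2))) by (field; lra).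
  assert (Y * (2 / t ^ 2) <= Y * (1 / a ^ 2 + 1 / b ^ 2)) by (apply Rmult_le_compat_l; auto).
  assert (Y ^ 2 * (1 / t ^ 4) <= Y ^ 2 * (1 / (a ^ 2 * b ^ 2))) by (apply Rmult_le_compat_l; [nra|auto]).
  lra.
Qed.

Lemma damp_prod_log_convex (x y : R) (N : nat) : 1 <= x ->
  damp_prod x y N ^ 2 <= damp_prod (x - 1/2) y N * damp_prod (x + 1/2) y N.
Proof.
  intro Hx. induction N; cbn [damp_prod]; [apply damp_log_convex; auto|].
  pose proof (pos_INR (S N)).
  pose proof (damp_log_convex y (x + INR (S N)) ltac:(lra)).
  replace (x - 1/2 + INR (S N)) with (x + INR (S N) - 1/2) by ring.
  replace (x + 1/2 + INR (S N)) with (x + INR (S N) + 1/2) by ring.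
  rewrite Rpow_mult_distr.
  transitivity ((damp_prod (x - 1/2) y N * damp_prod (x + 1/2) y N)
                * (damp y (x + INR (S N) - 1/2) * damp y (x + INR (S N) + 1/2))); [|right; ring].
  apply Rmult_le_compat; auto; apply pow2_ge_0.
Qed.

Lemma damp_prod_shift (x y : R) (N : nat) : 0 < x ->
  damp_prod (x + 1) y N * damp y x = damp_prod x y N * damp y (x + INR (S N)).
Proof.
  intro Hx. induction N; cbn [damp_prod]; [simpl INR; ring|].
  replace (x + 1 + INR (S N)) with (x + INR (S (S N))) by (rewrite (S_INR (S N)); ring).
  transitivity ((damp_prod (x + 1) y N * damp y x) * damp y (x + INR (S (S N)))); [ring|].
  rewrite IHN. ring.
Qed.

(* The discrete form of Legendre's duplication formula: the factors of index [2j] and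
   [2j+1] of [damp_prod 1 (2 y)] are those of index [j] of [damp_prod (1/2) y] and
   [damp_prod 1 y]. *)
Lemma damp_prod_duplication (y : R) (N : nat) :
  damp_prod 1 (2 * y) (2 * N) * damp y (INR N + 1) = damp_prod (1/2) y N * damp_prod 1 y N.
Proof.
  induction N.
  - change (2 * 0)%nat with 0%nat. cbn [damp_prod]. simpl INR. unfold damp. field.
  - replace (2 * S N)%nat with (S (S (2 * N))) by lia. cbn [damp_prod].
    pose proof (pos_INR N).
    replace (damp (2 * y) (1 + INR (S (2 * N)))) with (damp y (INR N + 1))
      by (unfold damp; rewrite S_INR, mult_INR; simpl INR; field; lra).
    replace (damp (2 * y) (1 + INR (S (S (2 * N))))) with (damp y (1/2 + INR (S N)))
      by (unfold damp; rewrite !S_INR, mult_INR; simpl INR; field; lra).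
    replace (1 + INR (S N)) with (INR (S N) + 1) by ring.
    transitivity ((damp_prod 1 (2 * y) (2 * N) * damp y (INR N + 1))
                  * damp y (1/2 + INR (S N)) * damp y (INR (S N) + 1)); [ring|].
    rewrite IHN. ring.
Qed.

Lemma sqr_ratio_bounds_of_log_convex (p q r s a b G1 G2 : R) :
  0 < p -> 0 < q -> 1 <= b -> b <= a ->
  q ^ 2 <= p * r -> r ^ 2 <= q * s -> r * a = p * G1 -> s * b = q * G2 ->
  1 <= G1 <= 2 -> 1 <= G2 <= 2 ->
  b / (2 * a ^ 2) <= (q / p) ^ 2 <= 2 / a.
Proof.
  intros Hp Hq Hb Hab C1 C2 S1 S2 HG1 HG2.
  assert (Er : r = p * G1 / a) by (rewrite <- S1; field; lra).
  assert (Es : s = q * G2 / b) by (rewrite <- S2; field; lra).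
  rewrite Er in C1, C2. rewrite Es in C2.
  replace ((q / p) ^ 2) with (q ^ 2 / p ^ 2) by (field; lra).
  pose proof (pow_lt p 2 Hp). pose proof (pow_lt q 2 Hq). assert (0 < a ^ 2) by (apply pow_lt; lra).
  split.
  - apply (Rmult_le_reg_r (p ^ 2 * (2 * a ^ 2))); [nra|].
    replace (b / (2 * a ^ 2) * (p ^ 2 * (2 * a ^ 2))) with (p ^ 2 * b) by (field; lra).
    replace (q ^ 2 / p ^ 2 * (p ^ 2 * (2 * a ^ 2))) with (2 * q ^ 2 * a ^ 2) by (field; lra).
    replace ((p * G1 / a) ^ 2) with (p ^ 2 * G1 ^ 2 / a ^ 2) in C2 by (field; lra).
    replace (q * (q * G2 / b)) with (q ^ 2 * G2 / b) in C2 by (field; lra).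
    apply (Rmult_le_compat_r (a ^ 2 * b)) in C2; [|nra].
    replace (p ^ 2 * G1 ^ 2 / a ^ 2 * (a ^ 2 * b)) with (p ^ 2 * G1 ^ 2 * b) in C2 by (field; lra).
    replace (q ^ 2 * G2 / b * (a ^ 2 * b)) with (q ^ 2 * G2 * a ^ 2) in C2 by (field; lra).
    assert (p ^ 2 * b <= p ^ 2 * G1 ^ 2 * b).
    { assert (1 <= G1 ^ 2) by nra. assert (0 <= p ^ 2 * b) by nra.
      replace (p ^ 2 * G1 ^ 2 * b) with ((p ^ 2 * b) * G1 ^ 2) by ring. nra. }
    assert (q ^ 2 * G2 * a ^ 2 <= 2 * q ^ 2 * a ^ 2).
    { assert (0 <= q ^ 2 * a ^ 2) by nra.
      replace (q ^ 2 * G2 * a ^ 2) with ((q ^ 2 * a ^ 2) * G2) by ring. nra. }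
    lra.
  - apply (Rmult_le_reg_r (p ^ 2)); [lra|].
    replace (q ^ 2 / p ^ 2 * p ^ 2) with (q ^ 2) by (field; lra).
    replace (2 / a * p ^ 2) with (p * (p * 2 / a)) by (field; lra).
    eapply Rle_trans; [apply C1|]. apply Rmult_le_compat_l; [lra|].
    unfold Rdiv. apply Rmult_le_compat_r; [apply Rlt_le, Rinv_0_lt_compat; lra|]. nra.
Qed.

Lemma damp_bounds_beyond (y t : R) (N : nat) :
  y ^ 2 <= (INR N + 1) ^ 2 -> INR N + 1 <= t -> 1 <= damp y t <= 2.
Proof. intros Hy Ht. pose proof (pos_INR N). split; [apply damp_ge_1; lra| apply damp_le_2; nra]. Qed.

Lemma damp_prod_ratio_sqr_bounds (y : R) (N : nat) : y ^ 2 <= (INR N + 1) ^ 2 ->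
  / (32 * (1 + y ^ 2)) <= (damp_prod 1 y N / damp_prod (1/2) y N) ^ 2 <= 2 / (1 + y ^ 2).
Proof.
  intros Hy. pose proof (pos_INR N) as HN. pose proof (pow2_ge_0 y).
  set (W := 1 + y ^ 2). set (A := 1 + 4 * y ^ 2).
  assert (HX : W / (2 * A ^ 2) <= (damp_prod 1 y N / damp_prod (1/2) y N) ^ 2 <= 2 / A).
  { apply (sqr_ratio_bounds_of_log_convex _ _ (damp_prod (3/2) y N) (damp_prod 2 y N)
             A W (damp y (1/2 + INR (S N))) (damp y (1 + INR (S N))));
      try (apply damp_prod_pos; lra); try (unfold A, W; lra);
      try (apply (damp_bounds_beyond y _ N Hy); rewrite S_INR; lra).
    - pose proof (damp_prod_log_convex 1 y N ltac:(lra)) as H1.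
      replace (1 - 1/2) with (1/2) in H1 by field. replace (1 + 1/2) with (3/2) in H1 by field.
      exact H1.
    - pose proof (damp_prod_log_convex (3/2) y N ltac:(lra)) as H1.
      replace (3/2 - 1/2) with 1 in H1 by field. replace (3/2 + 1/2) with 2 in H1 by field.
      exact H1.
    - pose proof (damp_prod_shift (1/2) y N ltac:(lra)) as H1.
      replace (1/2 + 1) with (3/2) in H1 by field.
      replace (damp y (1/2)) with A in H1 by (unfold damp, A; field). exact H1.
    - pose proof (damp_prod_shift 1 y N ltac:(lra)) as H1.
      replace (1 + 1) with 2 in H1 by ring.
      replace (damp y 1) with W in H1 by (unfold damp, W; field). exact H1. }
  assert (Ha : W <= A <= 4 * W) by (unfold W, A; lra).
  assert (HW1 : 1 <= W) by (unfold W; lra).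
  assert (HA2 : 0 < A ^ 2) by (apply pow_lt; lra).
  destruct HX as [HX1 HX2]. split.
  - eapply Rle_trans; [|exact HX1].
    apply (Rmult_le_reg_r (32 * W * (2 * A ^ 2))); [nra|].
    replace (/ (32 * W) * (32 * W * (2 * A ^ 2))) with (2 * A ^ 2) by (field; lra).
    replace (W / (2 * A ^ 2) * (32 * W * (2 * A ^ 2))) with (32 * W ^ 2) by (field; lra).
    nra.
  - eapply Rle_trans; [exact HX2|]. apply Rmult_le_compat_l; [lra|].
    apply Rinv_le_contravar; lra.
Qed.

Lemma damp_prod_half_ratio_bounds (y : R) (N : nat) : y ^ 2 <= (INR N + 1) ^ 2 ->
  let p := damp_prod (1/2) y N in let q := damp_prod 1 y N in
  / (32 * (1 + y ^ 2)) <= ((q / p) * damp y (INR N + 1)) ^ 2 <= 8 / (1 + y ^ 2) /\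
  (1 + y ^ 2) / 2 <= ((p / q) * damp y (INR N + 1)) ^ 2 <= 128 * (1 + y ^ 2).
Proof.
  intros Hy p q. pose proof (pow2_ge_0 y).
  set (W := 1 + y ^ 2). set (G0 := damp y (INR N + 1)).
  assert (Hp : 0 < p) by (apply damp_prod_pos; lra).
  assert (Hq : 0 < q) by (apply damp_prod_pos; lra).
  pose proof (damp_prod_ratio_sqr_bounds y N Hy) as HX. fold p q W in HX.
  set (X := (q / p) ^ 2) in HX.
  assert (HG0 : 1 <= G0 ^ 2 <= 4)
    by (pose proof (damp_bounds_beyond y (INR N + 1) N Hy (Rle_refl _)) as HG; fold G0 in HG; nra).
  assert (HX0 : 0 < X) by (unfold X; apply pow_lt, Rdiv_lt_0_compat; lra).
  assert (HW : 0 < W) by (unfold W; lra).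
  split.
  - replace ((q / p * G0) ^ 2) with (X * G0 ^ 2) by (unfold X; ring).
    split.
    + apply Rle_trans with (/ (32 * W) * 1); [lra|].
      apply Rmult_le_compat; try lra. apply Rlt_le, Rinv_0_lt_compat; lra.
    + apply Rle_trans with (2 / W * 4); [apply Rmult_le_compat; lra|].
      right. field. lra.
  - replace ((p / q * G0) ^ 2) with (/ X * G0 ^ 2) by (unfold X; field; lra).
    assert (HiX : W / 2 <= / X <= 32 * W).
    { split.
      - replace (W / 2) with (/ (2 / W)) by (field; lra). apply Rinv_le_contravar; lra.
      - replace (32 * W) with (/ / (32 * W)) by (field; lra).
        apply Rinv_le_contravar; [apply Rinv_0_lt_compat; lra|lra]. }
    split.
    + apply Rle_trans with (W / 2 * 1); [lra|]. apply Rmult_le_compat; lra.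
    + apply Rle_trans with (32 * W * 4); [apply Rmult_le_compat; lra|lra].
Qed.

Lemma Cmod_gauss_seq_sqr (x y : R) (N : nat) : 0 < x ->
  Cmod (gauss_seq (x, y) N) ^ 2 * poch_sqnorm x y N = INR (fact N) ^ 2 * exp (x * ln (INR N)) ^ 2.
Proof.
  intro Hx. unfold gauss_seq.
  assert (Hp : poch_prod (x, y) N <> RtoC 0) by (apply poch_prod_neq0_Re_pos; simpl; auto).
  rewrite Cmod_div, Cmod_mult, Cmod_R, Cmod_cpow, <- Cmod_poch_prod_sqr by auto. simpl Re.
  rewrite Rabs_pos_eq by apply pos_INR.
  assert (0 < Cmod (poch_prod (x, y) N)) by (apply Cmod_gt_0; auto).
  field. lra.
Qed.

Lemma Cmod_gauss_seq_sqr_damp (x y : R) (N : nat) : 0 < x ->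
  Cmod (gauss_seq (x, y) N) ^ 2 = Cmod (gauss_seq (x, 0) N) ^ 2 / damp_prod x y N.
Proof.
  intro Hx. pose proof (Cmod_gauss_seq_sqr x y N Hx) as H1.
  pose proof (Cmod_gauss_seq_sqr x 0 N Hx) as H2.
  rewrite poch_sqnorm_damp_prod in H1, H2 by auto. rewrite damp_prod_0 in H2 by auto.
  pose proof (poch_sqnorm_pos x 0 N Hx). pose proof (damp_prod_pos x y N Hx).
  apply (Rmult_eq_reg_r (poch_sqnorm x 0 N * damp_prod x y N)); [|nra].
  rewrite H1, <- H2. field. lra.
Qed.

Definition dup_seq (x y : R) (N : nat) : R :=
  Cmod (gauss_seq (1, 2 * y) (2 * N)%nat) ^ 2 / (Cmod (gauss_seq (x, y) N) ^ 2) ^ 2.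

(* By the duplication formula, [dup_ratio 1 y] is a constant multiple of
   [|Gamma (1/2 + iy)|^2 / |Gamma (1 + iy)|^2], and [dup_ratio (1/2) y] of its inverse. *)
Definition dup_ratio (x y : R) : R :=
  Cmod (Gamma (1, 2 * y)) ^ 2 / (Cmod (Gamma (x, y)) ^ 2) ^ 2.

Lemma is_lim_seq_sqr (u : nat -> R) (l : R) : is_lim_seq u l -> is_lim_seq (fun n => u n ^ 2) (l ^ 2).
Proof.
  intro Hu. replace (l ^ 2) with (l * l) by ring.
  eapply is_lim_seq_ext; [|apply is_lim_seq_mult'; [exact Hu|exact Hu]]. intro n. simpl. ring.
Qed.

Lemma dup_seq_cv (x y : R) : 0 < x -> is_lim_seq (dup_seq x y) (dup_ratio x y).
Proof.
  intro Hx. unfold dup_seq, dup_ratio.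
  assert (Hg : 0 < Cmod (Gamma (x, y))) by (apply Cmod_gt_0, Gamma_neq0; simpl; auto).
  apply is_lim_seq_div'.
  - apply is_lim_seq_sqr, Ccv_Cmod, Ccv_subseq_double, gauss_seq_cv.
  - apply is_lim_seq_sqr, is_lim_seq_sqr, Ccv_Cmod, gauss_seq_cv.
  - apply Rgt_not_eq, pow_lt, pow_lt, Hg.
Qed.

Lemma dup_ratio_pos (x y : R) : 0 < x -> 0 < dup_ratio x y.
Proof.
  intro Hx. unfold dup_ratio.
  assert (0 < Cmod (Gamma (1, 2 * y))) by (apply Cmod_gt_0, Gamma_neq0; simpl; lra).
  assert (0 < Cmod (Gamma (x, y))) by (apply Cmod_gt_0, Gamma_neq0; simpl; lra).
  apply Rdiv_lt_0_compat; repeat apply pow_lt; auto.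
Qed.

Lemma dup_seq_damp (x y : R) (N : nat) : 0 < x ->
  dup_seq x y N = dup_seq x 0 N *
    (damp_prod x y N ^ 2 * damp y (INR N + 1) / (damp_prod (1/2) y N * damp_prod 1 y N)).
Proof.
  intro Hx. unfold dup_seq.
  rewrite (Cmod_gauss_seq_sqr_damp 1 (2 * y)), (Cmod_gauss_seq_sqr_damp x y) by lra.
  replace (2 * 0) with 0 by ring.
  pose proof (damp_prod_duplication y N) as Hd.
  pose proof (damp_prod_pos 1 y N ltac:(lra)). pose proof (damp_prod_pos (1/2) y N ltac:(lra)).
  pose proof (damp_prod_pos x y N Hx).
  pose proof (damp_ge_1 y (INR N + 1) ltac:(pose proof (pos_INR N); lra)).
  replace (damp_prod 1 (2 * y) (2 * N))
    with (damp_prod (1/2) y N * damp_prod 1 y N / damp y (INR N + 1)) by (rewrite <- Hd; field; lra).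
  assert (0 < Cmod (gauss_seq (x, 0) N))
    by (apply Cmod_gt_0, gauss_seq_neq0, poch_prod_neq0_Re_pos; simpl; lra).
  field. repeat split; try lra; apply Rgt_not_eq, pow_lt; auto.
Qed.

Lemma eventually_sqr_le (y : R) : eventually (fun N : nat => y ^ 2 <= (INR N + 1) ^ 2).
Proof.
  destruct (exists_nat_ge (Rabs y)) as [N0 HN0]. exists N0. intros n Hn.
  pose proof (le_INR _ _ Hn). pose proof (Rabs_pos y).
  rewrite <- (pow2_abs y). apply pow_incr. lra.
Qed.

Lemma lim_sqr_bounds (u v : nat -> R) (L V m M : R) : is_lim_seq u L -> is_lim_seq v V ->
  eventually (fun n => m * v n ^ 2 <= u n ^ 2 <= M * v n ^ 2) ->
  m * V ^ 2 <= L ^ 2 <= M * V ^ 2.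
Proof.
  intros Hu Hv He.
  pose proof (is_lim_seq_sqr u L Hu) as Hu2. pose proof (is_lim_seq_sqr v V Hv) as Hv2.
  split.
  - apply (is_lim_seq_le_loc (fun n => m * v n ^ 2) (fun n => u n ^ 2) (m * V ^ 2) (L ^ 2));
      [eapply filter_imp; [|exact He]; intros n Hn; apply Hn|apply (is_lim_seq_scal_l _ m _ Hv2)|exact Hu2].
  - apply (is_lim_seq_le_loc (fun n => u n ^ 2) (fun n => M * v n ^ 2) (L ^ 2) (M * V ^ 2));
      [eapply filter_imp; [|exact He]; intros n Hn; apply Hn|exact Hu2|apply (is_lim_seq_scal_l _ M _ Hv2)].
Qed.

Lemma dup_ratio_1_bounds (d : nat) (y : R) :
  dup_ratio 1 0 ^ 2 / 32 * (1 + y ^ 2) ^ d <= dup_ratio 1 y ^ 2 * (1 + y ^ 2) ^ S d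
  <= 8 * dup_ratio 1 0 ^ 2 * (1 + y ^ 2) ^ d.
Proof.
  assert (HW : 0 < 1 + y ^ 2) by (pose proof (pow2_ge_0 y); lra).
  assert (H : / (32 * (1 + y ^ 2)) * dup_ratio 1 0 ^ 2 <= dup_ratio 1 y ^ 2
              <= 8 / (1 + y ^ 2) * dup_ratio 1 0 ^ 2).
  { apply (lim_sqr_bounds (dup_seq 1 y) (dup_seq 1 0)); try (apply dup_seq_cv; lra).
    eapply filter_imp; [|apply eventually_sqr_le with (y := y)].
    intros N HN. rewrite (dup_seq_damp 1 y N) by lra.
    destruct (damp_prod_half_ratio_bounds y N HN) as [[H1 H2] _].
    pose proof (damp_prod_pos 1 y N ltac:(lra)). pose proof (damp_prod_pos (1/2) y N ltac:(lra)).
    replace (damp_prod 1 y N ^ 2 * damp y (INR N + 1) / (damp_prod (1/2) y N * damp_prod 1 y N))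
      with (damp_prod 1 y N / damp_prod (1/2) y N * damp y (INR N + 1)) by (field; lra).
    pose proof (pow2_ge_0 (dup_seq 1 0 N)).
    rewrite Rpow_mult_distr, (Rmult_comm (dup_seq 1 0 N ^ 2)).
    split; apply Rmult_le_compat_r; auto. }
  pose proof (pow_lt _ d HW). set (W := 1 + y ^ 2) in *.
  change (W ^ S d) with (W * W ^ d).
  replace (dup_ratio 1 y ^ 2 * (W * W ^ d)) with (dup_ratio 1 y ^ 2 * W * W ^ d) by ring.
  split; apply Rmult_le_compat_r; try lra.
  - replace (dup_ratio 1 0 ^ 2 / 32) with (/ (32 * W) * dup_ratio 1 0 ^ 2 * W) by (field; lra).
    apply Rmult_le_compat_r; lra.
  - replace (8 * dup_ratio 1 0 ^ 2) with (8 / W * dup_ratio 1 0 ^ 2 * W) by (field; lra).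
    apply Rmult_le_compat_r; lra.
Qed.

Lemma dup_ratio_half_bounds (d : nat) (y : R) :
  dup_ratio (1/2) 0 ^ 2 / 2 * (1 + y ^ 2) ^ S d <= dup_ratio (1/2) y ^ 2 * (1 + y ^ 2) ^ d
  <= 128 * dup_ratio (1/2) 0 ^ 2 * (1 + y ^ 2) ^ S d.
Proof.
  assert (HW : 0 < 1 + y ^ 2) by (pose proof (pow2_ge_0 y); lra).
  assert (H : (1 + y ^ 2) / 2 * dup_ratio (1/2) 0 ^ 2 <= dup_ratio (1/2) y ^ 2
              <= 128 * (1 + y ^ 2) * dup_ratio (1/2) 0 ^ 2).
  { apply (lim_sqr_bounds (dup_seq (1/2) y) (dup_seq (1/2) 0)); try (apply dup_seq_cv; lra).
    eapply filter_imp; [|apply eventually_sqr_le with (y := y)].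
    intros N HN. rewrite (dup_seq_damp (1/2) y N) by lra.
    destruct (damp_prod_half_ratio_bounds y N HN) as [_ [H1 H2]].
    pose proof (damp_prod_pos 1 y N ltac:(lra)). pose proof (damp_prod_pos (1/2) y N ltac:(lra)).
    replace (damp_prod (1/2) y N ^ 2 * damp y (INR N + 1) / (damp_prod (1/2) y N * damp_prod 1 y N))
      with (damp_prod (1/2) y N / damp_prod 1 y N * damp y (INR N + 1)) by (field; lra).
    pose proof (pow2_ge_0 (dup_seq (1/2) 0 N)).
    rewrite Rpow_mult_distr, (Rmult_comm (dup_seq (1/2) 0 N ^ 2)).
    split; apply Rmult_le_compat_r; auto. }
  pose proof (pow_lt _ d HW). set (W := 1 + y ^ 2) in *.
  change (W ^ S d) with (W * W ^ d).
  replace (dup_ratio (1/2) 0 ^ 2 / 2 * (W * W ^ d)) with (W / 2 * dup_ratio (1/2) 0 ^ 2 * W ^ d)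
    by field.
  replace (128 * dup_ratio (1/2) 0 ^ 2 * (W * W ^ d)) with (128 * W * dup_ratio (1/2) 0 ^ 2 * W ^ d)
    by ring.
  split; apply Rmult_le_compat_r; lra.
Qed.

Lemma poch_sqnorm_succ_front (x y : R) (K : nat) :
  poch_sqnorm x y (S K) = (x ^ 2 + y ^ 2) * poch_sqnorm (x + 1) y K.
Proof.
  induction K; cbn [poch_sqnorm] in *; [simpl INR; ring|].
  rewrite IHK. replace (x + 1 + INR (S K)) with (x + INR (S (S K))) by (rewrite (S_INR (S K)); ring).
  ring.
Qed.

Lemma poch_sqnorm_reflect (x y : R) (K : nat) :
  poch_sqnorm (- (x + INR K)) y K = poch_sqnorm x y K.
Proof.
  revert x. induction K; intro x; [cbn [poch_sqnorm]; simpl INR; ring|].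
  rewrite poch_sqnorm_succ_front. cbn [poch_sqnorm].
  replace (- (x + INR (S K)) + 1) with (- (x + INR K)) by (rewrite S_INR; ring).
  rewrite IHK. ring.
Qed.

Lemma poch_sqnorm_bounds (x y : R) (M : nat) : 0 < x <= 1 ->
  (x ^ 2) ^ (S M) * (1 + y ^ 2) ^ (S M) <= poch_sqnorm x y M
  <= ((INR M + 1) ^ 2) ^ (S M) * (1 + y ^ 2) ^ (S M).
Proof.
  intro Hx. pose proof (pow2_ge_0 y) as HY.
  induction M as [|M [H1 H2]]; cbn [poch_sqnorm].
  - simpl. assert (x * x <= 1) by nra. assert (0 <= y * y) by nra.
    assert (x * x * (y * y) <= 1 * (y * y)) by (apply Rmult_le_compat_r; lra). split; lra.
  - set (Y := y ^ 2) in *. pose proof (pos_INR M) as HM. rewrite S_INR.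
    assert (Hx2 : x ^ 2 <= 1) by (simpl; nra).
    assert (x ^ 2 <= (x + (INR M + 1)) ^ 2) by (simpl; nra).
    assert (x ^ 2 * Y <= Y) by nra.
    assert (T1 : x ^ 2 * (1 + Y) <= (x + (INR M + 1)) ^ 2 + Y) by nra.
    assert ((x + (INR M + 1)) ^ 2 <= (INR M + 1 + 1) ^ 2) by (simpl; nra).
    assert (1 <= (INR M + 1 + 1) ^ 2) by (simpl; nra).
    assert (Y <= (INR M + 1 + 1) ^ 2 * Y) by nra.
    assert (T2 : (x + (INR M + 1)) ^ 2 + Y <= (INR M + 1 + 1) ^ 2 * (1 + Y)) by nra.
    assert (0 <= (x ^ 2) ^ S M * (1 + Y) ^ S M) by (apply Rmult_le_pos; apply pow_le; nra).
    assert (((INR M + 1) ^ 2) ^ S M <= ((INR M + 1 + 1) ^ 2) ^ S M) by (apply pow_incr; simpl; nra).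
    assert (0 <= (1 + Y) ^ S M) by (apply pow_le; lra).
    split.
    + transitivity (((x ^ 2) ^ S M * (1 + Y) ^ S M) * (x ^ 2 * (1 + Y))); [right; simpl; ring|].
      apply Rmult_le_compat; auto. nra.
    + transitivity ((((INR M + 1 + 1) ^ 2) ^ S M * (1 + Y) ^ S M) * ((INR M + 1 + 1) ^ 2 * (1 + Y)));
        [|right; simpl; ring].
      apply Rmult_le_compat; auto.
      * left; apply poch_sqnorm_pos; lra.
      * pose proof (pow2_ge_0 (x + (INR M + 1))). lra.
      * eapply Rle_trans; [apply H2|]. apply Rmult_le_compat_r; auto.
Qed.

Lemma poch_sqnorm_ratio_bounds (x y : R) (a b : nat) : 0 < x <= 1 ->
  let W := 1 + y ^ 2 in
  (x ^ 2) ^ S a / ((INR (a + b) + 1) ^ 2) ^ S (a + b)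
  <= poch_sqnorm x y a / poch_sqnorm x y (a + b) * W ^ b
  <= ((INR a + 1) ^ 2) ^ S a / (x ^ 2) ^ S (a + b).
Proof.
  intros Hx W.
  destruct (poch_sqnorm_bounds x y a Hx) as [A1 A2].
  destruct (poch_sqnorm_bounds x y (a + b) Hx) as [B1 B2].
  fold W in A1, A2, B1, B2.
  assert (HW : 1 <= W) by (unfold W; pose proof (pow2_ge_0 y); lra).
  replace (W ^ S (a + b)) with (W ^ S a * W ^ b) in B1, B2 by (rewrite <- pow_add; f_equal).
  set (pa := poch_sqnorm x y a) in *. set (pb := poch_sqnorm x y (a + b)) in *.
  set (Xa := (x ^ 2) ^ S a) in *. set (Xb := (x ^ 2) ^ S (a + b)) in *.
  set (Ua := ((INR a + 1) ^ 2) ^ S a) in *. set (Ub := ((INR (a + b) + 1) ^ 2) ^ S (a + b)) in *.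
  set (Wa := W ^ S a) in *. set (Wb := W ^ b) in *.
  assert (0 < Wa) by (apply pow_lt; lra). assert (0 < Wb) by (apply pow_lt; lra).
  assert (0 < Xa) by (apply pow_lt, pow_lt; lra). assert (0 < Xb) by (apply pow_lt, pow_lt; lra).
  assert (0 < Ub) by (apply pow_lt, pow_lt; pose proof (pos_INR (a + b)); lra).
  assert (0 < Ua) by (apply pow_lt, pow_lt; pose proof (pos_INR a); lra).
  assert (0 < pa) by (apply poch_sqnorm_pos; lra). assert (0 < pb) by (apply poch_sqnorm_pos; lra).
  split.
  - apply (Rmult_le_reg_r (pb * Ub)); [nra|].
    replace (Xa / Ub * (pb * Ub)) with (Xa * pb) by (field; lra).
    replace (pa / pb * Wb * (pb * Ub)) with (pa * Wb * Ub) by (field; lra).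
    assert (Xa * pb <= Xa * (Ub * (Wa * Wb))) by (apply Rmult_le_compat_l; lra).
    assert (Xa * Wa * Wb <= pa * Wb) by (apply Rmult_le_compat_r; lra).
    nra.
  - apply (Rmult_le_reg_r (pb * Xb)); [nra|].
    replace (Ua / Xb * (pb * Xb)) with (Ua * pb) by (field; lra).
    replace (pa / pb * Wb * (pb * Xb)) with (pa * Wb * Xb) by (field; lra).
    assert (pa * Wb <= Ua * Wa * Wb) by (apply Rmult_le_compat_r; lra).
    assert (Ua * (Xb * (Wa * Wb)) <= Ua * pb) by (apply Rmult_le_compat_l; lra).
    nra.
Qed.

(** * A closed form for [b_nu] *)

Lemma c_nu_pairs (n : nat) (nu : Z) (l : R) :
  c_nu n nu l =
  ((cpow 2 (RtoC (rho n) - (0%R, l)) * Gamma ((2 * INR n)%R, 0%R) * Gamma (0%R, l)) /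
   (Gamma (((IZR nu + rho n) / 2)%R, (l / 2)%R) * Gamma (((rho n - IZR nu - 2) / 2)%R, (l / 2)%R)))%C.
Proof.
  unfold c_nu.
  replace (Ci * RtoC l)%C with ((0%R, l) : C) by (apply C_ext; simpl; ring).
  replace (((0%R, l) + RtoC (IZR nu + rho n)) / RtoC 2)%C with ((((IZR nu + rho n) / 2)%R, (l / 2)%R) : C)
    by (apply C_ext; simpl; field).
  replace (((0%R, l) + RtoC (rho n - IZR nu - 2)) / RtoC 2)%C
    with ((((rho n - IZR nu - 2) / 2)%R, (l / 2)%R) : C) by (apply C_ext; simpl; field).
  replace (RtoC (rho n - 1)) with (((2 * INR n)%R, 0%R) : C) by (unfold rho; apply C_ext; simpl; ring).
  reflexivity.
Qed.

(* For [nu = 2 (n+1) + 2k + 2x - 1] with [x = 1] (and [c = 1/2]) or [x = 1/2] (and [c = -i]),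
   the recursion of [Gamma] removes every pole of [c_nu (n+1) nu] (times [l] if [x = 1/2]) and
   leaves this expression, continuous at [l = 0]. *)
Definition b_closed (n k : nat) (x : R) (c : C) (l : R) : C :=
  (c * cpow 2 (RtoC (rho (S n)) - (0%R, l)) * Gamma ((2 * INR (S n))%R, 0%R) * Gamma (1%R, l)
   * poch_prod ((- (x + INR k))%R, (l / 2)%R) k
   / (poch_prod (x, (l / 2)%R) (2 * n + k + 1) * (Gamma (x, (l / 2)%R) * Gamma (x, (l / 2)%R))))%C.

Lemma b_closed_denominator_neq0 (n k : nat) (x l : R) : 0 < x ->
  (poch_prod (x, (l / 2)%R) (2 * n + k + 1) * (Gamma (x, (l / 2)%R) * Gamma (x, (l / 2)%R)))%C <> RtoC 0.
Proof.
  intro Hx. apply Cmult_neq_0; [apply poch_prod_neq0_Re_pos; simpl; lra|].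
  apply Cmult_neq_0; apply Gamma_neq0; simpl; lra.
Qed.

Lemma b_closed_continuous_at_0 (n k : nat) (x : R) (c : C) : 0 < x ->
  Ccontinuity_pt (b_closed n k x c) 0.
Proof.
  intro Hx. unfold b_closed.
  assert (Hhalf : forall a : R, Ccontinuity_pt (fun l => (a, (l / 2)%R) : C) 0)
    by (intro a; apply (Ccontinuity_pt_ext (fun t => (a, (/ 2 * t)%R) : C));
        [intro t; f_equal; unfold Rdiv; ring| apply Ccontinuity_pt_linear]).
  assert (Hid : forall a : R, Ccontinuity_pt (fun l => (a, l) : C) 0)
    by (intro a; apply (Ccontinuity_pt_ext (fun t => (a, (1 * t)%R) : C));
        [intro t; f_equal; ring| apply Ccontinuity_pt_linear]).
  apply Ccontinuity_pt_div;
    [| |cbv beta; exact (b_closed_denominator_neq0 n k x 0 Hx)].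
  - apply Ccontinuity_pt_mult; [|apply Ccontinuity_pt_poch_prod, Hhalf].
    apply Ccontinuity_pt_mult; [|apply Ccontinuity_pt_Gamma; [apply Hid|simpl; lra]].
    apply Ccontinuity_pt_mult; [|apply Ccontinuity_pt_const].
    apply Ccontinuity_pt_mult; [apply Ccontinuity_pt_const|].
    apply Ccontinuity_pt_cpow, Ccontinuity_pt_minus; [apply Ccontinuity_pt_const|apply Hid].
  - apply Ccontinuity_pt_mult; [apply Ccontinuity_pt_poch_prod, Hhalf|].
    apply Ccontinuity_pt_mult; apply Ccontinuity_pt_Gamma; auto; simpl; lra.
Qed.

Definition b_closed_const (n : nat) (c : C) : R :=
  exp (rho (S n) * ln 2) ^ 2 * Cmod (Gamma ((2 * INR (S n))%R, 0%R)) ^ 2 * Cmod c ^ 2.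

Lemma b_closed_const_pos (n : nat) (c : C) : c <> RtoC 0 -> 0 < b_closed_const n c.
Proof.
  intro Hc. unfold b_closed_const.
  assert (0 < Cmod (Gamma ((2 * INR (S n))%R, 0%R)))
    by (apply Cmod_gt_0, Gamma_neq0; unfold Re; cbn [fst]; rewrite S_INR; pose proof (pos_INR n); lra).
  pose proof (exp_pos (rho (S n) * ln 2)). apply Cmod_gt_0 in Hc.
  apply Rmult_lt_0_compat; [apply Rmult_lt_0_compat|]; apply pow_lt; auto.
Qed.

Lemma Cmod_b_closed_sqr (n k : nat) (x : R) (c : C) (l : R) : 0 < x ->
  Cmod (b_closed n k x c l) ^ 2 =
  b_closed_const n c * dup_ratio x (l / 2)
    * (poch_sqnorm x (l / 2) k / poch_sqnorm x (l / 2) (2 * n + k + 1)).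
Proof.
  intro Hx. unfold b_closed, b_closed_const, dup_ratio. set (y := l / 2).
  rewrite Cmod_div by (apply b_closed_denominator_neq0; auto).
  rewrite !Cmod_mult, Cmod_cpow.
  replace (Re (RtoC (rho (S n)) - (0%R, l))%C) with (rho (S n)) by (simpl; ring).
  replace (2 * y) with l by (unfold y; field).
  rewrite <- (poch_sqnorm_reflect x y k), <- !Cmod_poch_prod_sqr.
  assert (0 < Cmod (Gamma (x, y))) by (apply Cmod_gt_0, Gamma_neq0; simpl; lra).
  assert (0 < Cmod (poch_prod (x, y) (2 * n + k + 1)))
    by (apply Cmod_gt_0, poch_prod_neq0_Re_pos; simpl; lra).
  field. lra.
Qed.

Lemma bounds_of_factorization (P A Q Rr W L : R) (d e : nat) (q1 q2 r1 r2 : R) :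
  0 < A -> 1 <= W -> W <= L <= 4 * W -> 0 < q1 -> 0 < r1 ->
  q1 * W ^ (2 * d) <= Q * W ^ e <= q2 * W ^ (2 * d) -> r1 <= Rr * W ^ d <= r2 ->
  P = A * Q * Rr ^ 2 ->
  A * q1 * r1 ^ 2 <= P * L ^ e <= 4 ^ e * (A * q2 * r2 ^ 2).
Proof.
  intros HA HW HL Hq1 Hr1 [HQ1 HQ2] HR HP.
  assert (HWd : 0 < W ^ (2 * d)) by (apply pow_lt; lra).
  assert (HWe : 0 < W ^ e) by (apply pow_lt; lra).
  assert (Hsq : r1 ^ 2 <= (Rr * W ^ d) ^ 2 <= r2 ^ 2) by (split; apply pow_incr; lra).
  assert (HPW : P * W ^ e * W ^ (2 * d) = A * (Q * W ^ e) * (Rr * W ^ d) ^ 2)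
    by (replace (2 * d)%nat with (d * 2)%nat by lia; rewrite HP, pow_mult; ring).
  assert (Hq : 0 <= Q * W ^ e) by nra.
  assert (Hlow : A * q1 * r1 ^ 2 <= P * W ^ e).
  { apply (Rmult_le_reg_r (W ^ (2 * d))); auto. rewrite HPW.
    transitivity (A * (q1 * W ^ (2 * d)) * r1 ^ 2); [right; ring|].
    apply Rmult_le_compat; [apply Rmult_le_pos; [lra|]|apply pow2_ge_0|apply Rmult_le_compat_l; lra|lra].
    apply Rmult_le_pos; lra. }
  assert (Hup : P * W ^ e <= A * q2 * r2 ^ 2).
  { apply (Rmult_le_reg_r (W ^ (2 * d))); auto. rewrite HPW.
    transitivity (A * (q2 * W ^ (2 * d)) * r2 ^ 2); [|right; ring].
    apply Rmult_le_compat; [apply Rmult_le_pos; lra|apply pow2_ge_0|apply Rmult_le_compat_l; lra|lra]. }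
  assert (HQ0 : 0 <= Q) by (apply (Rmult_le_reg_r (W ^ e)); lra).
  assert (HP0 : 0 <= P) by (rewrite HP; apply Rmult_le_pos; [apply Rmult_le_pos|apply pow2_ge_0]; lra).
  assert (W ^ e <= L ^ e) by (apply pow_incr; lra).
  assert (L ^ e <= 4 ^ e * W ^ e) by (rewrite <- Rpow_mult_distr; apply pow_incr; lra).
  split.
  - eapply Rle_trans; [exact Hlow|]. apply Rmult_le_compat_l; auto.
  - eapply Rle_trans; [apply Rmult_le_compat_l; eauto|].
    assert (0 <= 4 ^ e) by (apply pow_le; lra). nra.
Qed.

Lemma b_closed_bounds (n k : nat) (x : R) (c : C) (e : nat) (q1 q2 : R) :
  0 < x <= 1 -> c <> RtoC 0 -> 0 < q1 ->
  (forall y, q1 * (1 + y ^ 2) ^ (2 * (2 * n + 1)) <= dup_ratio x y ^ 2 * (1 + y ^ 2) ^ e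
             <= q2 * (1 + y ^ 2) ^ (2 * (2 * n + 1))) ->
  exists c1 c2, 0 < c1 /\
    forall l, c1 <= Cmod (b_closed n k x c l) ^ 4 * (1 + l ^ 2) ^ e <= c2.
Proof.
  intros Hx Hc Hq1 Hdup. set (d := (2 * n + 1)%nat) in *.
  set (A := b_closed_const n c ^ 2).
  assert (HA : 0 < A) by (apply pow_lt, b_closed_const_pos, Hc).
  set (r1 := (x ^ 2) ^ S k / ((INR (k + d) + 1) ^ 2) ^ S (k + d)).
  set (r2 := ((INR k + 1) ^ 2) ^ S k / (x ^ 2) ^ S (k + d)).
  assert (Hr1 : 0 < r1)
    by (apply Rdiv_lt_0_compat; repeat apply pow_lt; [lra|pose proof (pos_INR (k + d)); lra]).
  exists (A * q1 * r1 ^ 2), (4 ^ e * (A * q2 * r2 ^ 2)). split.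
  { apply Rmult_lt_0_compat; [apply Rmult_lt_0_compat|apply pow_lt]; auto. }
  intro l. set (y := l / 2).
  pose proof (pow2_ge_0 y).
  apply (bounds_of_factorization _ A (dup_ratio x y ^ 2) (poch_sqnorm x y k / poch_sqnorm x y (k + d))
           (1 + y ^ 2) (1 + l ^ 2) d e); auto; try lra.
  - unfold y. pose proof (pow2_ge_0 l). split; nra.
  - apply poch_sqnorm_ratio_bounds. lra.
  - replace (Cmod (b_closed n k x c l) ^ 4) with ((Cmod (b_closed n k x c l) ^ 2) ^ 2) by ring.
    rewrite Cmod_b_closed_sqr by lra. fold y.
    replace (2 * n + k + 1)%nat with (k + d)%nat by (unfold d; lia).
    unfold A. ring.
Qed.

Lemma S_INR_2n_k_1 (n k : nat) : INR (S (2 * n + k + 1)) = 2 * INR n + INR k + 2.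
Proof. rewrite S_INR, !plus_INR, mult_INR. simpl. ring. Qed.

Lemma c_nu_odd_closed_form (n k : nat) (nu : Z) (l : R) :
  IZR nu = 2 * INR (S n) + 2 * INR k + 1 -> l <> 0 ->
  c_nu (S n) nu l = b_closed n k 1 (RtoC (/ 2)) l.
Proof.
  intros Hnu Hl. rewrite c_nu_pairs. unfold b_closed.
  set (y := l / 2). assert (Hy : y <> 0) by (unfold y; lra).
  set (m1 := (2 * n + k + 1)%nat).
  set (w := ((- (1 + INR k))%R, y) : C).
  assert (HA : Gamma (((IZR nu + rho (S n)) / 2)%R, y) = (Gamma (1%R, y) * poch_prod (1%R, y) m1)%C).
  { rewrite <- Gamma_add_nat by (apply nonpole_Im; auto). f_equal.
    apply C_ext; unfold Cplus, RtoC; cbn [fst snd]; [|ring].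
    unfold m1. rewrite S_INR_2n_k_1. unfold rho. rewrite Hnu, !S_INR. field. }
  assert (HB : Gamma (1%R, y) = (Gamma w * (poch_prod w k * (0%R, y)))%C).
  { replace (poch_prod w k * (0%R, y))%C with (poch_prod w (S k))
      by (rewrite poch_prod_succ; f_equal; unfold w;
          apply C_ext; unfold Cplus, RtoC; cbn [fst snd]; [rewrite S_INR|]; ring).
    rewrite <- Gamma_add_nat by (apply nonpole_Im; auto). f_equal. unfold w.
    apply C_ext; unfold Cplus, RtoC; cbn [fst snd]; [rewrite !S_INR|]; ring. }
  assert (HC : (((rho (S n) - IZR nu - 2) / 2)%R, y) = w)
    by (apply C_ext; simpl; [|ring]; unfold rho; rewrite Hnu, S_INR; field).
  assert (H0 : Gamma (1%R, l) = ((0%R, l) * Gamma (0%R, l))%C).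
  { replace ((1%R, l) : C) with ((0%R, l) + 1)%C by (apply C_ext; simpl; ring).
    apply Gamma_succ, nonpole_Im, Hl. }
  assert (Hg1 : Gamma (1%R, y) <> RtoC 0) by (apply Gamma_neq0; simpl; lra).
  assert (HgB : Gamma w <> RtoC 0) by (intro E; apply Hg1; rewrite HB, E; ring).
  assert (HP1 : poch_prod (1%R, y) m1 <> RtoC 0) by (apply poch_prod_neq0_Re_pos; simpl; lra).
  assert (HP2 : poch_prod w k <> RtoC 0)
    by (apply poch_prod_neq0; intros j _; apply (nonpole_Im _ _ Hy j)).
  assert (Hiy : ((0%R, y) : C) <> RtoC 0) by (intro E; apply (f_equal snd) in E; simpl in E; auto).
  rewrite HA, HC, H0, HB, RtoC_inv by lra.
  replace ((0%R, l) : C) with (RtoC 2 * (0%R, y))%C by (apply C_ext; simpl; unfold y; field).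
  field. repeat split; auto; intro E; apply RtoC_inj in E; lra.
Qed.

Lemma l_c_nu_even_closed_form (n k : nat) (nu : Z) (l : R) :
  IZR nu = 2 * INR (S n) + 2 * INR k -> l <> 0 ->
  (RtoC l * c_nu (S n) nu l)%C = b_closed n k (1/2) (0%R, (-1)%R) l.
Proof.
  intros Hnu Hl. rewrite c_nu_pairs. unfold b_closed.
  set (y := l / 2). assert (Hy : y <> 0) by (unfold y; lra).
  set (m2 := (2 * n + k + 1)%nat).
  set (w := ((- (1/2 + INR k))%R, y) : C).
  assert (HA : Gamma (((IZR nu + rho (S n)) / 2)%R, y)
               = (Gamma ((1/2)%R, y) * poch_prod ((1/2)%R, y) m2)%C).
  { rewrite <- Gamma_add_nat by (apply nonpole_Im; auto). f_equal.
    apply C_ext; unfold Cplus, RtoC; cbn [fst snd]; [|ring].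
    unfold m2. rewrite S_INR_2n_k_1. unfold rho. rewrite Hnu, !S_INR. field. }
  assert (HB : Gamma ((1/2)%R, y) = (Gamma w * poch_prod w k)%C).
  { rewrite <- Gamma_add_nat by (apply nonpole_Im; auto). f_equal. unfold w.
    apply C_ext; unfold Cplus, RtoC; cbn [fst snd]; [rewrite S_INR|]; field. }
  assert (HC : (((rho (S n) - IZR nu - 2) / 2)%R, y) = w)
    by (apply C_ext; simpl; [|ring]; unfold rho; rewrite Hnu, S_INR; field).
  assert (H0 : Gamma (1%R, l) = ((0%R, l) * Gamma (0%R, l))%C).
  { replace ((1%R, l) : C) with ((0%R, l) + 1)%C by (apply C_ext; simpl; ring).
    apply Gamma_succ, nonpole_Im, Hl. }
  assert (Hg1 : Gamma ((1/2)%R, y) <> RtoC 0) by (apply Gamma_neq0; simpl; lra).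
  assert (HgB : Gamma w <> RtoC 0) by (intro E; apply Hg1; rewrite HB, E; ring).
  assert (HP1 : poch_prod ((1/2)%R, y) m2 <> RtoC 0) by (apply poch_prod_neq0_Re_pos; simpl; lra).
  assert (HP2 : poch_prod w k <> RtoC 0)
    by (apply poch_prod_neq0; intros j _; apply (nonpole_Im _ _ Hy j)).
  rewrite HA, HC, H0, HB.
  replace (RtoC l) with ((0%R, l) * (0%R, (-1)%R))%C by (apply C_ext; simpl; ring).
  field. auto.
Qed.

(** * Bounds for [b_nu] *)

Lemma lim_punctured_eq (f g : R -> C) :
  (forall l, l <> 0 -> f l = g l) -> Cmod_continuous_at g 0 ->
  @lim C_CS (filtermap f (locally' 0)) = g 0.
Proof.
  intros Heq Hc. apply lim_of_filterlim; [exact (Rbar_locally'_filter (Finite 0))|].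
  apply (@filterlim_locally R C_CS (locally' 0) _ f (g 0)).
  intro eps. destruct (Hc eps (cond_pos eps)) as [del [Hd Ht]].
  exists (mkposreal del Hd). intros t Hb Hne. rewrite Heq by auto.
  apply ball_of_Cmod, Ht, Hb.
Qed.

Lemma b_nu_closed_form (n : nat) (nu : Z) (g : R -> C) :
  (forall l, l <> 0 -> b_raw n nu l = g l) -> Ccontinuity_pt g 0 ->
  forall l, b_nu n nu l = g l.
Proof.
  intros Heq Hc l. unfold b_nu. destruct (Req_EM_T l 0) as [->|Hl]; auto.
  apply lim_punctured_eq; auto. apply Ccontinuity_pt_Cmod, Hc.
Qed.

Lemma pow4_le_reg (a b : R) : 0 <= a -> 0 <= b -> a ^ 4 <= b ^ 4 -> a <= b.
Proof.
  intros Ha Hb H. apply Rnot_lt_le. intro Hlt.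
  assert (0 <= a ^ 2 * b + a * b ^ 2 + b ^ 3)
    by (assert (0 <= b ^ 3) by (apply pow_le; lra); nra).
  assert (0 < a ^ 3) by (apply pow_lt; lra).
  assert (0 < (a - b) * (a ^ 3 + (a ^ 2 * b + a * b ^ 2 + b ^ 3)))
    by (apply Rmult_lt_0_compat; lra).
  nra.
Qed.

Lemma Rinv_bounds_of_pow4 (m T c1 c2 K : R) :
  0 < c1 -> 0 < m -> 0 < T -> c1 <= (m * T) ^ 4 <= c2 ->
  1 <= K -> c2 <= K -> / c1 <= K ->
  / K * T <= / m <= K * T.
Proof.
  intros Hc1 Hm HT [B1 B2] HK1 HKc2 HKc1.
  assert (HK4 : K <= K ^ 4)
    by (replace (K ^ 4) with (K * K ^ 3) by ring; assert (1 <= K ^ 3) by (apply pow_R1_Rle; lra); nra).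
  assert (HmT : 0 < m * T) by nra.
  split.
  - apply (Rmult_le_reg_r (K * m)); [nra|].
    replace (/ K * T * (K * m)) with (m * T) by (field; lra).
    replace (/ m * (K * m)) with K by (field; lra).
    apply pow4_le_reg; lra.
  - apply (Rmult_le_reg_r m); [lra|]. rewrite Rinv_l by lra.
    replace (K * T * m) with (K * (m * T)) by ring.
    apply pow4_le_reg; [lra|nra|]. rewrite Rpow_mult_distr. replace (1 ^ 4) with 1 by ring.
    assert (Hc : / c1 * c1 <= K ^ 4 * (m * T) ^ 4)
      by (apply Rmult_le_compat; try lra; apply Rlt_le, Rinv_0_lt_compat; lra).
    rewrite Rinv_l in Hc by lra. lra.
Qed.

Lemma Rinv_Cmod_bounds_of_pow4 (f : R -> C) (e : nat) (c1 c2 : R) : 0 < c1 ->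
  (forall l, c1 <= Cmod (f l) ^ 4 * (1 + l ^ 2) ^ e <= c2) ->
  (forall l, f l <> RtoC 0) /\
  exists K, 0 < K /\ forall l,
    / K * Rpower (1 + l ^ 2) (INR e / 4) <= / Cmod (f l) /\
    / Cmod (f l) <= K * Rpower (1 + l ^ 2) (INR e / 4).
Proof.
  intros Hc1 Hb.
  assert (Hpos : forall l, 0 < Cmod (f l)).
  { intro l. destruct (Hb l) as [H1 _]. pose proof (Cmod_ge_0 (f l)).
    destruct (Req_dec (Cmod (f l)) 0) as [E|E]; [|lra].
    rewrite E in H1. replace (0 ^ 4) with 0 in H1 by ring. lra. }
  split; [intros l E; specialize (Hpos l); rewrite E, Cmod_0 in Hpos; lra|].
  exists (Rmax 1 (Rmax c2 (/ c1))). split; [pose proof (Rmax_l 1 (Rmax c2 (/ c1))); lra|].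
  intro l. apply Rinv_bounds_of_pow4 with c1 c2; auto.
  - apply exp_pos.
  - rewrite Rpow_mult_distr, <- (Rpower_pow 4 (Rpower _ _)), Rpower_mult by apply exp_pos.
    replace (INR e / 4 * INR 4) with (INR e) by (simpl; field).
    rewrite Rpower_pow by (pose proof (pow2_ge_0 l); lra). apply Hb.
  - apply Rmax_l.
  - eapply Rle_trans; [apply Rmax_l|apply Rmax_r].
  - eapply Rle_trans; [apply Rmax_r|apply Rmax_r].
Qed.

Lemma nu_offset (n : nat) (nu : Z) : IZR nu > rho (S n) - 2 ->
  exists k : nat, IZR nu = 2 * INR (S n) + 2 * INR k \/ IZR nu = 2 * INR (S n) + 2 * INR k + 1.
Proof.
  intro Hnu.
  assert (Hlt : IZR (2 * Z.of_nat (S n) - 1) < IZR nu).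
  { rewrite minus_IZR, mult_IZR, <- INR_IZR_INZ. unfold rho in Hnu. simpl (IZR 2). simpl (IZR 1). lra. }
  apply lt_IZR in Hlt.
  set (j := Z.to_nat (nu - Z.of_nat (2 * S n))).
  assert (Hj : IZR nu = 2 * INR (S n) + INR j).
  { replace nu with (Z.of_nat (2 * S n + j)) at 1 by (unfold j; lia).
    rewrite <- INR_IZR_INZ, plus_INR, mult_INR. simpl (INR 2). ring. }
  destruct (Nat.Even_or_Odd j) as [[k Hk]|[k Hk]]; exists k; rewrite Hj, Hk;
    [left|right]; rewrite ?plus_INR, mult_INR; simpl; ring.
Qed.

Lemma cond_odd_offset (n k : nat) (nu : Z) :
  IZR nu = 2 * INR (S n) + 2 * INR k + 1 -> cond (S n) nu.
Proof. intro Hnu. exists (S k). unfold rho. rewrite Hnu, !S_INR. field. Qed.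

Lemma not_cond_even_offset (n k : nat) (nu : Z) :
  IZR nu = 2 * INR (S n) + 2 * INR k -> ~ cond (S n) nu.
Proof.
  intros Hnu [j Hj]. unfold rho in Hj. rewrite Hnu in Hj.
  assert (E : INR (2 * k + 1) = INR (2 * j)) by (rewrite plus_INR, !mult_INR; simpl; lra).
  apply INR_eq in E. lia.
Qed.

Lemma b_nu_bounds_odd_offset (n k : nat) (nu : Z) :
  IZR nu = 2 * INR (S n) + 2 * INR k + 1 ->
  (forall l : R, b_nu (S n) nu l <> RtoC 0) /\
  (exists K : R, 0 < K /\ forall l : R,
     / K * Rpower (1 + l ^ 2) (INR (4 * n + 3) / 4) <= / Cmod (b_nu (S n) nu l) /\
     / Cmod (b_nu (S n) nu l) <= K * Rpower (1 + l ^ 2) (INR (4 * n + 3) / 4)).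
Proof.
  intro Hnu.
  pose proof (cond_odd_offset n k nu Hnu) as Hcond.
  set (g := b_closed n k 1 (RtoC (/ 2))).
  assert (Hc : RtoC (/ 2) <> RtoC 0) by (intro E; apply RtoC_inj in E; lra).
  destruct (b_closed_bounds n k 1 (RtoC (/ 2)) (4 * n + 3)
              (dup_ratio 1 0 ^ 2 / 32) (8 * dup_ratio 1 0 ^ 2))
    as [c1 [c2 [Hc1 Hb]]]; try lra; auto.
  { pose proof (dup_ratio_pos 1 0 ltac:(lra)). apply Rdiv_lt_0_compat; [apply pow_lt|]; lra. }
  { intro y. replace (4 * n + 3)%nat with (S (2 * (2 * n + 1))) by lia. apply dup_ratio_1_bounds. }
  assert (Heq : forall l, b_nu (S n) nu l = g l).
  { apply b_nu_closed_form; [|apply b_closed_continuous_at_0; lra].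
    intros l Hl. unfold b_raw. destruct (excluded_middle_informative (cond (S n) nu)); [|contradiction].
    apply c_nu_odd_closed_form; auto. }
  apply Rinv_Cmod_bounds_of_pow4 with c1 c2; auto. intro l. rewrite Heq. apply Hb.
Qed.

Lemma b_nu_bounds_even_offset (n k : nat) (nu : Z) :
  IZR nu = 2 * INR (S n) + 2 * INR k ->
  (forall l : R, b_nu (S n) nu l <> RtoC 0) /\
  (exists K : R, 0 < K /\ forall l : R,
     / K * Rpower (1 + l ^ 2) (INR (4 * n + 1) / 4) <= / Cmod (b_nu (S n) nu l) /\
     / Cmod (b_nu (S n) nu l) <= K * Rpower (1 + l ^ 2) (INR (4 * n + 1) / 4)).
Proof.
  intro Hnu.
  pose proof (not_cond_even_offset n k nu Hnu) as Hcond.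
  set (g := b_closed n k (1/2) (0%R, (-1)%R)).
  assert (Hc : ((0%R, (-1)%R) : C) <> RtoC 0) by (intro E; apply (f_equal snd) in E; simpl in E; lra).
  destruct (b_closed_bounds n k (1/2) (0%R, (-1)%R) (4 * n + 1)
              (dup_ratio (1/2) 0 ^ 2 / 2) (128 * dup_ratio (1/2) 0 ^ 2))
    as [c1 [c2 [Hc1 Hb]]]; try lra; auto.
  { pose proof (dup_ratio_pos (1/2) 0 ltac:(lra)). apply Rdiv_lt_0_compat; [apply pow_lt|]; lra. }
  { intro y. replace (2 * (2 * n + 1))%nat with (S (4 * n + 1)) by lia.
    apply dup_ratio_half_bounds. }
  assert (Heq : forall l, b_nu (S n) nu l = g l).
  { apply b_nu_closed_form; [|apply b_closed_continuous_at_0; lra].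
    intros l Hl. unfold b_raw. destruct (excluded_middle_informative (cond (S n) nu)); [contradiction|].
    apply l_c_nu_even_closed_form; auto. }
  apply Rinv_Cmod_bounds_of_pow4 with c1 c2; auto. intro l. rewrite Heq. apply Hb.
Qed.

Theorem mainTheorem7 (n : nat) (nu : Z) :
  (1 <= n)%nat ->
  IZR nu > rho n - 2 ->
  (forall l : R, b_nu n nu l <> RtoC 0) /\
  (exists K : R, 0 < K /\
     forall l : R,
       / K * Rpower (1 + l ^ 2) ((2 * rho n - 4 - eps_nu n nu) / 4)
         <= / Cmod (b_nu n nu l) /\
       / Cmod (b_nu n nu l)
         <= K * Rpower (1 + l ^ 2) ((2 * rho n - 4 - eps_nu n nu) / 4)).
Proof.
  intros Hn Hnu. destruct n as [|n]; [lia|].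
  destruct (nu_offset n nu Hnu) as [k [Hev|Hodd]]; unfold eps_nu.
  - destruct (excluded_middle_informative (cond (S n) nu)) as [Hc|_];
      [exfalso; exact (not_cond_even_offset n k nu Hev Hc)|].
    replace ((2 * rho (S n) - 4 - 1) / 4) with (INR (4 * n + 1) / 4)
      by (unfold rho; rewrite plus_INR, mult_INR, (S_INR n); simpl; field).
    exact (b_nu_bounds_even_offset n k nu Hev).
  - destruct (excluded_middle_informative (cond (S n) nu)) as [_|Hc];
      [|exfalso; exact (Hc (cond_odd_offset n k nu Hodd))].
    replace ((2 * rho (S n) - 4 - -1) / 4) with (INR (4 * n + 3) / 4)
      by (unfold rho; rewrite plus_INR, mult_INR, (S_INR n); simpl; field).
    exact (b_nu_bounds_odd_offset n k nu Hodd).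
Qed.
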